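(* Consider the scheme with the classical entropy $f(\rho)=\rho(\ln\rho-1)$. Let $\rho^{n-1},\rho^n,\phi^n\in\mathcal C$ with $\min_{i,j,k}\rho^n_{i,j,k}>0$. Then there exists a unique pair $(\rho^{n+1},\phi^{n+1})\in\mathcal C\times\mathcal C$ with $\rho^{n+1}_{i,j,k}>0$ for all $i,j,k=1,\dots,N$ solving the scheme.
   Context: Grid setting: $\Omega=(a,b)^3$, $N\in\mathbb N$, $h=(b-a)/N$, cell centers $(x_i,y_j,z_k)=(a+(i-\tfrac12)h,a+(j-\tfrac12)h,a+(k-\tfrac12)h)$, $1\le i,j,k\le N$. $\mathcal C$ is the space of cell-centered grid functions $u_{i,j,k}$, extended to ghost points by the discrete homogeneous Neumann condition $u_{0,j,k}=u_{1,j,k}$, $u_{N+1,j,k}=u_{N,j,k}$ (and likewise in $j$ and $k$). Operators: $D_xf_{i+1/2,j,k}=(f_{i+1,j,k}-f_{i,j,k})/h$, $A_xf_{i+1/2,j,k}=(f_{i+1,j,k}+f_{i,j,k})/2$; for face-centered $g$, $d_xg_{i,j,k}=(g_{i+1/2,j,k}-g_{i-1/2,j,k})/h$; analogously in $y,z$. $\nabla_hf=(D_xf,D_yf,D_zf)$, $\Delta_hf=d_xD_xf+d_yD_yf+d_zD_zf$, and for cell-centered $\mathcal D$, $\nabla_h\cdot(\mathcal D\nabla_hf):=d_x(A_x\mathcal D\,D_xf)+d_y(A_y\mathcal D\,D_yf)+d_z(A_z\mathcal D\,D_zf)$. Scheme (classical case: $f'(\rho)=\ln\rho$, $1/f''(\rho)=\rho$,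 $f'''(\rho)=-1/\rho^2$): parameters $\gamma,\mu,\alpha,\chi,\theta>0$, $\Delta t>0$. With $\hat\rho^{n+\frac12}=\big((\tfrac32\rho^n-\tfrac12\rho^{n-1})^2+\Delta t^8\big)^{1/2}$ pointwise, find $\rho^{n+1},\phi^{n+1}\in\mathcal C$ with $$\frac{\rho^{n+1}-\rho^n}{\Delta t}=\nabla_h\cdot\Big[\hat\rho^{n+\frac12}\nabla_h\Big(\gamma S^{n+\frac12}-\frac\chi2(\phi^{n+1}+\phi^n)+\frac{\chi^2\Delta t}{4\theta}(\rho^{n+1}-\rho^n)\Big)\Big],$$ $$\theta\frac{\phi^{n+1}-\phi^n}{\Delta t}=\frac\mu2\Delta_h(\phi^{n+1}+\phi^n)-\frac\alpha2(\phi^{n+1}+\phi^n)+\frac\chi2(\rho^{n+1}+\rho^n),$$ where $S^{n+\frac12}=\ln\rho^{n+1}-\frac{\rho^{n+1}-\rho^n}{2\rho^{n+1}}-\frac{(\rho^{n+1}-\rho^n)^2}{6(\rho^{n+1})^2}$ pointwise. *)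

From Stdlib Require Import Reals Lra Lia.
Open Scope R_scope.

(* A cell-centered grid function; only the values at indices 1..N in each
   direction are meaningful (the space C). *)
Definition grid := nat -> nat -> nat -> R.

Definition in_grid (N i : nat) : Prop := (1 <= i <= N)%nat.

(* index clamping: realises the discrete homogeneous Neumann ghost values
   u_0 = u_1, u_{N+1} = u_N *)
Definition cl (N i : nat) : nat := Nat.max 1 (Nat.min N i).

Definition gext (N : nat) (u : grid) : grid :=
  fun i j k => u (cl N i) (cl N j) (cl N k).

Definition divDgrad (N : nat) (h : R) (D f : grid) (i j k : nat) : R :=
  let D' := gext N D in
  let f' := gext N f in
  ((D' (S i) j k + D' i j k) / 2 * ((f' (S i) j k - f' i j k) / h)
   - (D' i j k + D' (i - 1)%nat j k) / 2 * ((f' i j k - f' (i - 1)%nat j k) / h)) / h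
+ ((D' i (S j) k + D' i j k) / 2 * ((f' i (S j) k - f' i j k) / h)
   - (D' i j k + D' i (j - 1)%nat k) / 2 * ((f' i j k - f' i (j - 1)%nat k) / h)) / h
+ ((D' i j (S k) + D' i j k) / 2 * ((f' i j (S k) - f' i j k) / h)
   - (D' i j k + D' i j (k - 1)%nat) / 2 * ((f' i j k - f' i j (k - 1)%nat) / h)) / h.

Definition lap (N : nat) (h : R) (f : grid) (i j k : nat) : R :=
  let f' := gext N f in
  ((f' (S i) j k - f' i j k) / h - (f' i j k - f' (i - 1)%nat j k) / h) / h
+ ((f' i (S j) k - f' i j k) / h - (f' i j k - f' i (j - 1)%nat k) / h) / h
+ ((f' i j (S k) - f' i j k) / h - (f' i j k - f' i j (k - 1)%nat) / h) / h.

Definition mesh (a b : R) (N : nat) : R := (b - a) / INR N.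

Definition rhohat (dt : R) (rho_prev rho_n : grid) : grid :=
  fun i j k => sqrt ((3/2 * rho_n i j k - 1/2 * rho_prev i j k) ^ 2 + dt ^ 8).

(* S^{n+1/2}, classical entropy f(rho) = rho (ln rho - 1) *)
Definition Shalf (rho_n rho1 : grid) : grid :=
  fun i j k =>
    ln (rho1 i j k) - (rho1 i j k - rho_n i j k) / (2 * rho1 i j k)
    - (rho1 i j k - rho_n i j k) ^ 2 / (6 * (rho1 i j k) ^ 2).

Definition potential (gamma chi theta dt : R) (rho_n phi_n rho1 phi1 : grid) : grid :=
  fun i j k =>
    gamma * Shalf rho_n rho1 i j k - chi / 2 * (phi1 i j k + phi_n i j k)
    + chi ^ 2 * dt / (4 * theta) * (rho1 i j k - rho_n i j k).

Definition scheme (a b : R) (N : nat) (gamma mu alpha chi theta dt : R)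
    (rho_prev rho_n phi_n rho1 phi1 : grid) : Prop :=
  let h := mesh a b N in
  forall i j k, in_grid N i -> in_grid N j -> in_grid N k ->
    (rho1 i j k - rho_n i j k) / dt
      = divDgrad N h (rhohat dt rho_prev rho_n)
          (potential gamma chi theta dt rho_n phi_n rho1 phi1) i j k
    /\
    theta * ((phi1 i j k - phi_n i j k) / dt)
      = mu / 2 * lap N h (fun i j k => phi1 i j k + phi_n i j k) i j k
        - alpha / 2 * (phi1 i j k + phi_n i j k)
        + chi / 2 * (rho1 i j k + rho_n i j k).

Definition grid_pos (N : nat) (u : grid) : Prop :=
  forall i j k, in_grid N i -> in_grid N j -> in_grid N k -> 0 < u i j k.

Definition grid_eq (N : nat) (u v : grid) : Prop :=
  forall i j k, in_grid N i -> in_grid N j -> in_grid N k -> u i j k = v i j k.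

(* Write [rho^{n+1} = rho^n + A v] with [A = nabla_h . (hat rho^{n+1/2} nabla_h .)] and
   [phi^{n+1} = u - phi^n].  The scheme is then the Euler-Lagrange system of a functional
   [K (v, u)]: its cell part contains an antiderivative [F] of [S^{n+1/2}] in [rho^{n+1}],
   whose term [(rho^n)^2 / (6 rho^{n+1})] blows up as [rho^{n+1} -> 0+], together with the
   nonnegative forms [- <v, A v>] and [- <u, Delta_h u>].  The penalty [(sum v)^2 / 2] removes
   the kernel of [A] (the constants), and it vanishes at critical points because [A] has
   zero sum.  Thus [K] is coercive and attains its minimum on a compact set on whose
   boundary [rho^{n+1}] is so small that [K] exceeds [K (0, 0)]; the minimizer is interior,
   hence a positive solution.
   For uniqueness, testing the difference of two solutions with the differences of the
   potentials and of the [phi]-equations leaves [sum (S(rho_1) - S(rho_2)) (rho_1 - rho_2) <= 0],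
   while [S^{n+1/2}] is strictly increasing in [rho^{n+1}]. *)

From Stdlib Require Import Reals Lra Lia Classical ClassicalEpsilon List ZArith FunctionalExtensionality.
From Coquelicot Require Coquelicot.
Open Scope R_scope.

(** * Finite sums over the grid *)

Fixpoint sumN (n : nat) (f : nat -> R) : R :=
  match n with O => 0 | S n' => sumN n' f + f (S n') end.

Definition sum3 (N : nat) (g : grid) : R :=
  sumN N (fun i => sumN N (fun j => sumN N (fun k => g i j k))).

Lemma sumN_ext n f g : (forall i, (1 <= i <= n)%nat -> f i = g i) -> sumN n f = sumN n g.
Proof.
  induction n; simpl; intros H; auto.
  rewrite IHn by (intros; apply H; lia). rewrite H by lia. auto.
Qed.

Lemma sumN_plus n f g : sumN n (fun i => f i + g i) = sumN n f + sumN n g.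
Proof. induction n; simpl; [lra|rewrite IHn; lra]. Qed.

Lemma sumN_minus n f g : sumN n (fun i => f i - g i) = sumN n f - sumN n g.
Proof. induction n; simpl; [lra|rewrite IHn; lra]. Qed.

Lemma sumN_scal n c f : sumN n (fun i => c * f i) = c * sumN n f.
Proof. induction n; simpl; [lra|rewrite IHn; lra]. Qed.

Lemma sumN_opp n f : - sumN n f = sumN n (fun i => - f i).
Proof. induction n; simpl; [lra|rewrite <- IHn; lra]. Qed.

Lemma sumN_const n c : sumN n (fun _ => c) = INR n * c.
Proof. induction n; simpl sumN; [simpl; lra|rewrite IHn, S_INR; lra]. Qed.

Lemma sumN_zero n : sumN n (fun _ => 0) = 0.
Proof. rewrite sumN_const; lra. Qed.

Lemma sumN_nonneg n f : (forall i, (1 <= i <= n)%nat -> 0 <= f i) -> 0 <= sumN n f.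
Proof.
  induction n; simpl; intros H; [lra|].
  assert (0 <= sumN n f) by (apply IHn; intros; apply H; lia).
  assert (0 <= f (S n)) by (apply H; lia). lra.
Qed.

Lemma sumN_ge_term n f i0 : (forall i, (1 <= i <= n)%nat -> 0 <= f i) ->
  (1 <= i0 <= n)%nat -> f i0 <= sumN n f.
Proof.
  induction n; simpl; intros H Hi; [lia|].
  destruct (Nat.eq_dec i0 (S n)).
  - subst. assert (0 <= sumN n f) by (apply sumN_nonneg; intros; apply H; lia). lra.
  - assert (f i0 <= sumN n f) by (apply IHn; [intros; apply H; lia|lia]).
    assert (0 <= f (S n)) by (apply H; lia). lra.
Qed.

Lemma sumN_nonneg_eq0 n f : (forall i, (1 <= i <= n)%nat -> 0 <= f i) -> sumN n f = 0 ->
  forall i, (1 <= i <= n)%nat -> f i = 0.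
Proof.
  intros H H0 i Hi. pose proof (sumN_ge_term n f i H Hi). pose proof (H i Hi). lra.
Qed.

Lemma sumN_single n f i0 : (forall i, (1 <= i <= n)%nat -> i <> i0 -> f i = 0) ->
  (1 <= i0 <= n)%nat -> sumN n f = f i0.
Proof.
  induction n; simpl; intros H Hi; [lia|].
  destruct (Nat.eq_dec i0 (S n)).
  - subst. rewrite (sumN_ext n f (fun _ => 0)). rewrite sumN_zero; lra.
    intros; apply H; lia.
  - rewrite IHn; [rewrite (H (S n)); [lra|lia|lia]|intros; apply H; lia|lia].
Qed.

Lemma sumN_swap n m (f : nat -> nat -> R) :
  sumN n (fun i => sumN m (fun j => f i j)) = sumN m (fun j => sumN n (fun i => f i j)).
Proof.
  induction n; simpl.
  - rewrite sumN_zero; auto.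
  - rewrite IHn. rewrite <- sumN_plus. auto.
Qed.

Lemma sumN_derivable_pt_lim n (g : nat -> R -> R) g' t0 :
  (forall i, (1 <= i <= n)%nat -> derivable_pt_lim (g i) t0 (g' i)) ->
  derivable_pt_lim (fun t => sumN n (fun i => g i t)) t0 (sumN n g').
Proof.
  induction n; simpl; intros H.
  - apply derivable_pt_lim_const.
  - apply (derivable_pt_lim_plus (fun t => sumN n (fun i => g i t)) (g (S n))).
    apply IHn; intros; apply H; lia. apply H; lia.
Qed.

Lemma sumN_Un_cv n (g : nat -> nat -> R) l :
  (forall i, (1 <= i <= n)%nat -> Un_cv (fun m => g i m) (l i)) ->
  Un_cv (fun m => sumN n (fun i => g i m)) (sumN n l).
Proof.
  induction n; simpl; intros H.
  - intros e He; exists O; intros; unfold Rdist; rewrite Rminus_0_r, Rabs_R0; lra.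
  - apply CV_plus. apply IHn; intros; apply H; lia. apply H; lia.
Qed.

Lemma sum3_ext N f g : (forall i j k, in_grid N i -> in_grid N j -> in_grid N k -> f i j k = g i j k) ->
  sum3 N f = sum3 N g.
Proof.
  intros H; unfold sum3. apply sumN_ext; intros i Hi; apply sumN_ext; intros j Hj;
  apply sumN_ext; intros k Hk; apply H; unfold in_grid; auto.
Qed.

Lemma sum3_plus N f g : sum3 N (fun i j k => f i j k + g i j k) = sum3 N f + sum3 N g.
Proof.
  unfold sum3. rewrite <- sumN_plus. apply sumN_ext; intros.
  rewrite <- sumN_plus. apply sumN_ext; intros. rewrite <- sumN_plus. auto.
Qed.

Lemma sum3_minus N f g : sum3 N (fun i j k => f i j k - g i j k) = sum3 N f - sum3 N g.
Proof.
  unfold sum3. rewrite <- sumN_minus. apply sumN_ext; intros.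
  rewrite <- sumN_minus. apply sumN_ext; intros. rewrite <- sumN_minus. auto.
Qed.

Lemma sum3_scal N c f : sum3 N (fun i j k => c * f i j k) = c * sum3 N f.
Proof.
  unfold sum3. rewrite <- sumN_scal. apply sumN_ext; intros.
  rewrite <- sumN_scal. apply sumN_ext; intros. rewrite <- sumN_scal. auto.
Qed.

Lemma sum3_const N c : sum3 N (fun _ _ _ => c) = INR N * (INR N * (INR N * c)).
Proof.
  unfold sum3. rewrite <- sumN_const. apply sumN_ext; intros.
  rewrite <- sumN_const. apply sumN_ext; intros. rewrite sumN_const. auto.
Qed.

Lemma sum3_const_eq0 N c : (1 <= N)%nat -> sum3 N (fun _ _ _ => c) = 0 -> c = 0.
Proof.
  intros HN H. rewrite sum3_const in H.
  assert (INR N <> 0) by (apply not_0_INR; lia).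
  apply Rmult_integral in H. destruct H as [H|H]; [contradiction|].
  apply Rmult_integral in H. destruct H as [H|H]; [contradiction|].
  apply Rmult_integral in H. destruct H as [H|H]; [contradiction|auto].
Qed.

Lemma sum3_nonneg N f : (forall i j k, in_grid N i -> in_grid N j -> in_grid N k -> 0 <= f i j k) ->
  0 <= sum3 N f.
Proof.
  intros H; unfold sum3. apply sumN_nonneg; intros i Hi; apply sumN_nonneg; intros j Hj;
  apply sumN_nonneg; intros k Hk; apply H; unfold in_grid; auto.
Qed.

Lemma sum3_sq_nonneg N f : 0 <= sum3 N (fun i j k => f i j k ^ 2).
Proof. apply sum3_nonneg; intros; apply pow2_ge_0. Qed.

Lemma sum3_le N f g : (forall i j k, in_grid N i -> in_grid N j -> in_grid N k -> f i j k <= g i j k) ->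
  sum3 N f <= sum3 N g.
Proof.
  intros H. assert (0 <= sum3 N (fun i j k => g i j k - f i j k)).
  apply sum3_nonneg; intros; specialize (H i j k H0 H1 H2); lra.
  rewrite sum3_minus in H0; lra.
Qed.

Lemma sum3_ge_term N f i0 j0 k0 :
  (forall i j k, in_grid N i -> in_grid N j -> in_grid N k -> 0 <= f i j k) ->
  in_grid N i0 -> in_grid N j0 -> in_grid N k0 -> f i0 j0 k0 <= sum3 N f.
Proof.
  intros H Hi Hj Hk; unfold sum3.
  assert (A1 : f i0 j0 k0 <= sumN N (fun k => f i0 j0 k)).
  { apply (sumN_ge_term _ (fun k => f i0 j0 k)); auto. all: intros; apply H; unfold in_grid; auto. }
  assert (A2 : sumN N (fun k => f i0 j0 k) <= sumN N (fun j => sumN N (fun k => f i0 j k))).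
  { apply (sumN_ge_term _ (fun j => sumN N (fun k => f i0 j k))); auto.
    all: intros; apply sumN_nonneg; intros; apply H; unfold in_grid; auto. }
  assert (A3 : sumN N (fun j => sumN N (fun k => f i0 j k))
               <= sumN N (fun i => sumN N (fun j => sumN N (fun k => f i j k)))).
  { apply (sumN_ge_term _ (fun i => sumN N (fun j => sumN N (fun k => f i j k)))); auto.
    all: intros; apply sumN_nonneg; intros; apply sumN_nonneg; intros; apply H; unfold in_grid; auto. }
  lra.
Qed.

Lemma sum3_sq_ge_term N f i j k : in_grid N i -> in_grid N j -> in_grid N k ->
  f i j k ^ 2 <= sum3 N (fun i j k => f i j k ^ 2).
Proof. intros. apply (sum3_ge_term N (fun i j k => f i j k ^ 2)); auto; intros; apply pow2_ge_0. Qed.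

Lemma sum3_nonneg_eq0 N f : (forall i j k, in_grid N i -> in_grid N j -> in_grid N k -> 0 <= f i j k) ->
  sum3 N f <= 0 -> forall i j k, in_grid N i -> in_grid N j -> in_grid N k -> f i j k = 0.
Proof.
  intros H H0 i j k Hi Hj Hk. pose proof (sum3_ge_term N f i j k H Hi Hj Hk). pose proof (H i j k Hi Hj Hk). lra.
Qed.

Lemma sum3_derivable_pt_lim N (g : nat -> nat -> nat -> R -> R) g' t0 :
  (forall i j k, in_grid N i -> in_grid N j -> in_grid N k -> derivable_pt_lim (g i j k) t0 (g' i j k)) ->
  derivable_pt_lim (fun t => sum3 N (fun i j k => g i j k t)) t0 (sum3 N g').
Proof.
  intros H; unfold sum3.
  apply (sumN_derivable_pt_lim N (fun i t => sumN N (fun j => sumN N (fun k => g i j k t)))); intros i Hi.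
  apply (sumN_derivable_pt_lim N (fun j t => sumN N (fun k => g i j k t))); intros j Hj.
  apply (sumN_derivable_pt_lim N (fun k t => g i j k t)); intros k Hk.
  apply H; unfold in_grid; auto.
Qed.

Lemma sum3_Un_cv N (g : nat -> nat -> nat -> nat -> R) l :
  (forall i j k, in_grid N i -> in_grid N j -> in_grid N k -> Un_cv (fun m => g i j k m) (l i j k)) ->
  Un_cv (fun m => sum3 N (fun i j k => g i j k m)) (sum3 N l).
Proof.
  intros H; unfold sum3.
  apply (sumN_Un_cv N (fun i m => sumN N (fun j => sumN N (fun k => g i j k m)))); intros i Hi.
  apply (sumN_Un_cv N (fun j m => sumN N (fun k => g i j k m))); intros j Hj.
  apply (sumN_Un_cv N (fun k m => g i j k m)); intros k Hk.
  apply H; unfold in_grid; auto.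
Qed.

Definition delta3 (i0 j0 k0 : nat) : grid :=
  fun i j k => if Nat.eq_dec i i0 then if Nat.eq_dec j j0 then if Nat.eq_dec k k0 then 1 else 0 else 0 else 0.

Lemma delta3_bound i0 j0 k0 i j k : 0 <= delta3 i0 j0 k0 i j k <= 1.
Proof. unfold delta3; repeat destruct Nat.eq_dec; lra. Qed.

Lemma sum3_delta3_mul N i0 j0 k0 (w : grid) :
  in_grid N i0 -> in_grid N j0 -> in_grid N k0 ->
  sum3 N (fun i j k => delta3 i0 j0 k0 i j k * w i j k) = w i0 j0 k0.
Proof.
  intros Hi Hj Hk; unfold sum3.
  rewrite (sumN_single _ _ i0); auto.
  rewrite (sumN_single _ _ j0); auto.
  rewrite (sumN_single _ _ k0); auto.
  unfold delta3; repeat (destruct Nat.eq_dec; try congruence). lra.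
  intros; unfold delta3; repeat (destruct Nat.eq_dec; try congruence); lra.
  intros; rewrite <- (sumN_zero N); apply sumN_ext; intros;
   unfold delta3; repeat (destruct Nat.eq_dec; try congruence); lra.
  intros; rewrite <- (sumN_zero N); apply sumN_ext; intros; rewrite <- (sumN_zero N); apply sumN_ext; intros;
   unfold delta3; repeat (destruct Nat.eq_dec; try congruence); lra.
Qed.

Lemma sum3_delta3 N i0 j0 k0 :
  in_grid N i0 -> in_grid N j0 -> in_grid N k0 -> sum3 N (delta3 i0 j0 k0) = 1.
Proof.
  intros. rewrite <- (sum3_delta3_mul N i0 j0 k0 (fun _ _ _ => 1)) by auto.
  apply sum3_ext; intros; lra.
Qed.

(** * Summation by parts *)

Lemma cl_id N i : in_grid N i -> cl N i = i.
Proof. unfold in_grid, cl; intros; lia. Qed.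
Lemma cl_in_grid N i : (1 <= N)%nat -> in_grid N (cl N i).
Proof. unfold in_grid, cl; intros; lia. Qed.
Lemma cl_0 N : (1 <= N)%nat -> cl N 0 = 1%nat.
Proof. unfold cl; intros. rewrite Nat.min_0_r. reflexivity. Qed.
Lemma cl_S_N N : (1 <= N)%nat -> cl N (S N) = N.
Proof. unfold cl; intros. rewrite Nat.min_l by lia. rewrite Nat.max_r by lia. reflexivity. Qed.

Lemma sumN_S_mul_diff n (phi G : nat -> R) :
  sumN (S n) (fun i => phi i * (G i - G (i - 1)%nat)) =
  phi (S n) * G (S n) - phi 1%nat * G O - sumN n (fun i => (phi (S i) - phi i) * G i).
Proof.
  induction n.
  - simpl. ring.
  - change (sumN (S (S n)) (fun i => phi i * (G i - G (i - 1)%nat)))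
      with (sumN (S n) (fun i => phi i * (G i - G (i - 1)%nat))
            + phi (S (S n)) * (G (S (S n)) - G (S (S n) - 1)%nat)).
    rewrite IHn. replace (S (S n) - 1)%nat with (S n) by lia. simpl sumN. ring.
Qed.

Lemma sumN_by_parts n (phi G : nat -> R) : (1 <= n)%nat -> G O = 0 -> G n = 0 ->
  sumN n (fun i => phi i * (G i - G (i - 1)%nat)) = - sumN (n - 1) (fun i => (phi (S i) - phi i) * G i).
Proof.
  intros Hn H0 Hn0. destruct n; [lia|]. rewrite sumN_S_mul_diff, H0, Hn0.
  replace (S n - 1)%nat with n by lia. ring.
Qed.

Lemma sumN3_nonneg_eq0 n1 n2 n3 (f : nat -> nat -> nat -> R) :
  (forall a b c, (1 <= a <= n1)%nat -> (1 <= b <= n2)%nat -> (1 <= c <= n3)%nat -> 0 <= f a b c) ->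
  sumN n1 (fun a => sumN n2 (fun b => sumN n3 (fun c => f a b c))) = 0 ->
  forall a b c, (1 <= a <= n1)%nat -> (1 <= b <= n2)%nat -> (1 <= c <= n3)%nat -> f a b c = 0.
Proof.
  intros H H0 a b c Ha Hb Hc.
  assert (U1 : sumN n2 (fun b => sumN n3 (fun c => f a b c)) = 0).
  { apply (sumN_nonneg_eq0 n1 (fun a => sumN n2 (fun b => sumN n3 (fun c => f a b c)))); auto.
    intros; apply sumN_nonneg; intros; apply sumN_nonneg; intros; apply H; auto. }
  assert (U2 : sumN n3 (fun c => f a b c) = 0).
  { apply (sumN_nonneg_eq0 n2 (fun b => sumN n3 (fun c => f a b c))); auto.
    intros; apply sumN_nonneg; intros; apply H; auto. }
  apply (sumN_nonneg_eq0 n3 (fun c => f a b c)); auto.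
Qed.

Lemma nat_chain_const N (g : nat -> R) : (forall i, (1 <= i <= N - 1)%nat -> g (S i) = g i) ->
  forall i, (1 <= i <= N)%nat -> g i = g 1%nat.
Proof.
  intros H. induction i; intros Hi; [lia|]. destruct i; [auto|].
  rewrite H by lia. apply IHi; lia.
Qed.

Lemma avg_mul_sq_nonneg p q c : 0 < p -> 0 < q -> 0 <= (p + q) / 2 * c * c.
Proof.
  intros. replace ((p + q) / 2 * c * c) with ((p + q) / 2 * (c * c)) by ring.
  apply Rmult_le_pos; [lra|nra].
Qed.

Lemma avg_mul_sq_eq0 p q c : 0 < p -> 0 < q -> (p + q) / 2 * c * c = 0 -> c = 0.
Proof.
  intros Hp Hq Hc. assert (c * c = 0).
  { apply (Rmult_eq_reg_l ((p + q) / 2)); [|lra]. rewrite Rmult_0_r, <- Hc; ring. }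
  nra.
Qed.

Lemma divDgrad_plus_scal N h D f g t i j k :
  divDgrad N h D (fun i j k => f i j k + t * g i j k) i j k
  = divDgrad N h D f i j k + t * divDgrad N h D g i j k.
Proof. unfold divDgrad, gext. cbv zeta. unfold Rdiv. ring. Qed.

Lemma divDgrad_minus N h D f g i j k :
  divDgrad N h D (fun i j k => f i j k - g i j k) i j k = divDgrad N h D f i j k - divDgrad N h D g i j k.
Proof. unfold divDgrad, gext. cbv zeta. unfold Rdiv. ring. Qed.

Lemma divDgrad_scal N h D f t i j k :
  divDgrad N h D (fun i j k => t * f i j k) i j k = t * divDgrad N h D f i j k.
Proof. unfold divDgrad, gext. cbv zeta. unfold Rdiv. ring. Qed.

Lemma divDgrad_const N h D c i j k : divDgrad N h D (fun _ _ _ => c) i j k = 0.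
Proof. unfold divDgrad, gext. cbv zeta. unfold Rdiv. ring. Qed.

Lemma divDgrad_ext N h D f g i j k : (forall i j k, f i j k = g i j k) ->
  divDgrad N h D f i j k = divDgrad N h D g i j k.
Proof. intros H. unfold divDgrad, gext. rewrite !H. reflexivity. Qed.

Lemma lap_divDgrad N h f i j k : h <> 0 -> lap N h f i j k = divDgrad N h (fun _ _ _ => 1) f i j k.
Proof. intros. unfold lap, divDgrad, gext. cbv zeta. field. auto. Qed.

Definition div1 (N : nat) (h : R) (d f : nat -> R) (i : nat) : R :=
  ((d (cl N (S i)) + d (cl N i)) / 2 * ((f (cl N (S i)) - f (cl N i)) / h)
   - (d (cl N i) + d (cl N (i - 1))) / 2 * ((f (cl N i) - f (cl N (i - 1))) / h)) / h.

(* One-dimensional summation by parts; the clamped ghost values kill both boundary fluxes. *)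
Lemma sumN_mul_div1 N h (d f z : nat -> R) : (1 <= N)%nat -> h <> 0 ->
  sumN N (fun i => z i * div1 N h d f i)
  = -1 / (h * h) * sumN (N - 1) (fun i => (d (S i) + d i) / 2 * (z (S i) - z i) * (f (S i) - f i)).
Proof.
  intros HN Hh.
  set (G := fun i => (d (cl N (S i)) + d (cl N i)) / 2 * ((f (cl N (S i)) - f (cl N i)) / h) / h).
  rewrite (sumN_ext N _ (fun i => z i * (G i - G (i - 1)%nat))).
  2:{ intros i Hi. unfold div1, G. replace (S (i - 1)) with i by lia. field. auto. }
  rewrite sumN_by_parts; auto.
  - rewrite sumN_opp, <- sumN_scal. apply sumN_ext; intros i Hi.
    unfold G. rewrite !cl_id by (unfold in_grid; lia). field. auto.
  - unfold G. rewrite cl_0, (cl_id N 1) by (unfold in_grid; lia). unfold Rdiv. ring.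
  - unfold G. rewrite cl_S_N, (cl_id N N) by (unfold in_grid; lia). unfold Rdiv. ring.
Qed.

Lemma divDgrad_lines N h D f i j k : in_grid N i -> in_grid N j -> in_grid N k ->
  divDgrad N h D f i j k
  = div1 N h (fun i => D i j k) (fun i => f i j k) i
    + div1 N h (fun j => D i j k) (fun j => f i j k) j
    + div1 N h (fun k => D i j k) (fun k => f i j k) k.
Proof.
  intros Hi Hj Hk. unfold divDgrad, div1, gext. cbv zeta.
  rewrite !(cl_id N i), !(cl_id N j), !(cl_id N k) by auto. reflexivity.
Qed.

Section SummationByParts.
Variables (N : nat) (h : R) (D : grid).

Definition energy_x (z f : grid) := sumN N (fun j => sumN N (fun k => sumN (N-1) (fun i =>
   (D (S i) j k + D i j k) / 2 * (z (S i) j k - z i j k) * (f (S i) j k - f i j k)))).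
Definition energy_y (z f : grid) := sumN N (fun i => sumN N (fun k => sumN (N-1) (fun j =>
   (D i (S j) k + D i j k) / 2 * (z i (S j) k - z i j k) * (f i (S j) k - f i j k)))).
Definition energy_z (z f : grid) := sumN N (fun i => sumN N (fun j => sumN (N-1) (fun k =>
   (D i j (S k) + D i j k) / 2 * (z i j (S k) - z i j k) * (f i j (S k) - f i j k)))).
Definition energy (z f : grid) := energy_x z f + energy_y z f + energy_z z f.

Hypothesis HN : (1 <= N)%nat.
Hypothesis Hh : h <> 0.

Lemma sum3_mul_divDgrad z f :
  sum3 N (fun i j k => z i j k * divDgrad N h D f i j k) = - energy z f / (h * h).
Proof.
  rewrite (sum3_ext N _ (fun i j k => z i j k * div1 N h (fun i => D i j k) (fun i => f i j k) i
     + z i j k * div1 N h (fun j => D i j k) (fun j => f i j k) j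
     + z i j k * div1 N h (fun k => D i j k) (fun k => f i j k) k)).
  2:{ intros i j k Hi Hj Hk. rewrite divDgrad_lines by auto. ring. }
  rewrite !sum3_plus. unfold sum3, energy, energy_x, energy_y, energy_z.
  rewrite (sumN_swap N N (fun i j => sumN N (fun k => z i j k * _))).
  assert (EX : sumN N (fun j => sumN N (fun i => sumN N (fun k =>
                  z i j k * div1 N h (fun i => D i j k) (fun i => f i j k) i)))
               = -1 / (h * h) * sumN N (fun j => sumN N (fun k => sumN (N - 1) (fun i =>
                  (D (S i) j k + D i j k) / 2 * (z (S i) j k - z i j k) * (f (S i) j k - f i j k))))).
  { rewrite <- sumN_scal. apply sumN_ext; intros j Hj. rewrite sumN_swap, <- sumN_scal.
    apply sumN_ext; intros k Hk. apply sumN_mul_div1; auto. }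
  assert (EY : sumN N (fun i => sumN N (fun j => sumN N (fun k =>
                  z i j k * div1 N h (fun j => D i j k) (fun j => f i j k) j)))
               = -1 / (h * h) * sumN N (fun i => sumN N (fun k => sumN (N - 1) (fun j =>
                  (D i (S j) k + D i j k) / 2 * (z i (S j) k - z i j k) * (f i (S j) k - f i j k))))).
  { rewrite <- sumN_scal. apply sumN_ext; intros i Hi. rewrite sumN_swap, <- sumN_scal.
    apply sumN_ext; intros k Hk. apply sumN_mul_div1; auto. }
  assert (EZ : sumN N (fun i => sumN N (fun j => sumN N (fun k =>
                  z i j k * div1 N h (fun k => D i j k) (fun k => f i j k) k)))
               = -1 / (h * h) * sumN N (fun i => sumN N (fun j => sumN (N - 1) (fun k =>
                  (D i j (S k) + D i j k) / 2 * (z i j (S k) - z i j k) * (f i j (S k) - f i j k))))).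
  { rewrite <- sumN_scal. apply sumN_ext; intros i Hi. rewrite <- sumN_scal.
    apply sumN_ext; intros j Hj. apply sumN_mul_div1; auto. }
  rewrite EX, EY, EZ. field. auto.
Qed.

Lemma energy_sym z f : energy z f = energy f z.
Proof.
  unfold energy, energy_x, energy_y, energy_z.
  f_equal; [f_equal|]; apply sumN_ext; intros; apply sumN_ext; intros; apply sumN_ext; intros; ring.
Qed.

Lemma sum3_mul_divDgrad_sym z f : sum3 N (fun i j k => z i j k * divDgrad N h D f i j k) =
  sum3 N (fun i j k => f i j k * divDgrad N h D z i j k).
Proof. rewrite !sum3_mul_divDgrad, energy_sym. auto. Qed.

Lemma sum3_divDgrad f : sum3 N (fun i j k => divDgrad N h D f i j k) = 0.
Proof.
  rewrite (sum3_ext N _ (fun i j k => (fun _ _ _ => 1) i j k * divDgrad N h D f i j k)) by (intros; ring).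
  rewrite sum3_mul_divDgrad_sym.
  rewrite (sum3_ext N _ (fun _ _ _ => 0)). rewrite sum3_const; ring.
  intros. rewrite divDgrad_const. ring.
Qed.

Hypothesis HD : forall i j k, 0 < D i j k.

Lemma energy_x_self_nonneg z : 0 <= energy_x z z.
Proof. repeat (apply sumN_nonneg; intros); apply avg_mul_sq_nonneg; auto. Qed.
Lemma energy_y_self_nonneg z : 0 <= energy_y z z.
Proof. repeat (apply sumN_nonneg; intros); apply avg_mul_sq_nonneg; auto. Qed.
Lemma energy_z_self_nonneg z : 0 <= energy_z z z.
Proof. repeat (apply sumN_nonneg; intros); apply avg_mul_sq_nonneg; auto. Qed.

Lemma sum3_mul_divDgrad_self_nonpos z : sum3 N (fun i j k => z i j k * divDgrad N h D z i j k) <= 0.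
Proof.
  rewrite sum3_mul_divDgrad. unfold energy.
  pose proof (energy_x_self_nonneg z). pose proof (energy_y_self_nonneg z). pose proof (energy_z_self_nonneg z).
  assert (0 < h * h) by (destruct (Rlt_or_le 0 h); nra).
  assert (0 <= (energy_x z z + energy_y z z + energy_z z z) / (h * h))
    by (unfold Rdiv; apply Rmult_le_pos; [lra|left; apply Rinv_0_lt_compat; lra]).
  unfold Rdiv in *. lra.
Qed.

Lemma sum3_mul_divDgrad_self_eq0 z : sum3 N (fun i j k => z i j k * divDgrad N h D z i j k) = 0 ->
  forall i j k, in_grid N i -> in_grid N j -> in_grid N k -> z i j k = z 1%nat 1%nat 1%nat.
Proof.
  intros H0.
  assert (0 < h * h) by (destruct (Rlt_or_le 0 h); nra).
  rewrite sum3_mul_divDgrad in H0. unfold energy in H0.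
  assert (HE : energy_x z z + energy_y z z + energy_z z z = 0).
  { apply (Rmult_eq_reg_r (/ (h*h))). 2: apply Rgt_not_eq, Rinv_0_lt_compat; auto.
    unfold Rdiv in H0. lra. }
  pose proof (energy_x_self_nonneg z). pose proof (energy_y_self_nonneg z). pose proof (energy_z_self_nonneg z).
  assert (Ex : forall i j k, (1 <= i <= N-1)%nat -> in_grid N j -> in_grid N k -> z (S i) j k = z i j k).
  { intros i j k Hi Hj Hk. assert (Hx : energy_x z z = 0) by lra.
    pose proof (sumN3_nonneg_eq0 _ _ _ _
      ltac:(intros; apply avg_mul_sq_nonneg; auto) Hx j k i Hj Hk Hi) as Hz.
    apply avg_mul_sq_eq0 in Hz; auto. lra. }
  assert (Ey : forall i j k, in_grid N i -> (1 <= j <= N-1)%nat -> in_grid N k -> z i (S j) k = z i j k).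
  { intros i j k Hi Hj Hk. assert (Hy : energy_y z z = 0) by lra.
    pose proof (sumN3_nonneg_eq0 _ _ _ _
      ltac:(intros; apply avg_mul_sq_nonneg; auto) Hy i k j Hi Hk Hj) as Hz.
    apply avg_mul_sq_eq0 in Hz; auto. lra. }
  assert (Ez : forall i j k, in_grid N i -> in_grid N j -> (1 <= k <= N-1)%nat -> z i j (S k) = z i j k).
  { intros i j k Hi Hj Hk. assert (Hzz : energy_z z z = 0) by lra.
    pose proof (sumN3_nonneg_eq0 _ _ _ _
      ltac:(intros; apply avg_mul_sq_nonneg; auto) Hzz i j k Hi Hj Hk) as Hz.
    apply avg_mul_sq_eq0 in Hz; auto. lra. }
  intros i j k Hi Hj Hk. unfold in_grid in *.
  rewrite (nat_chain_const N (fun i => z i j k)) by (auto; intros; apply Ex; unfold in_grid; auto).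
  rewrite (nat_chain_const N (fun j => z 1%nat j k)) by (auto; intros; apply Ey; unfold in_grid; auto; lia).
  rewrite (nat_chain_const N (fun k => z 1%nat 1%nat k)) by (auto; intros; apply Ez; unfold in_grid; auto; lia).
  reflexivity.
Qed.
End SummationByParts.

(** * Minimization on closed bounded sets of grid pairs *)

Definition grid2 := (grid * grid)%type.

Definition cv_on_grid (N : nat) (s : nat -> grid2) (x : grid2) : Prop :=
  forall i j k, in_grid N i -> in_grid N j -> in_grid N k ->
    Un_cv (fun n => fst (s n) i j k) (fst x i j k) /\ Un_cv (fun n => snd (s n) i j k) (snd x i j k).

Definition seq_continuous_on (N : nat) (C : grid2 -> Prop) (F : grid2 -> R) : Prop :=
  forall s x, (forall n, C (s n)) -> C x -> cv_on_grid N s x -> Un_cv (fun n => F (s n)) (F x).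

Definition seq_closed (N : nat) (C : grid2 -> Prop) : Prop :=
  forall s x, (forall n, C (s n)) -> cv_on_grid N s x -> C x.

Definition bounded_on_grid (N : nat) (C : grid2 -> Prop) (M : R) : Prop :=
  forall p, C p -> forall i j k, in_grid N i -> in_grid N j -> in_grid N k ->
    Rabs (fst p i j k) <= M /\ Rabs (snd p i j k) <= M.

Lemma Rinv_INR_S_small (eps : R) : 0 < eps -> exists N0 : nat, forall n, (N0 <= n)%nat -> / (INR n + 1) < eps.
Proof.
  intros He. destruct (archimed (/ eps)) as [H1 _].
  assert (0 <= up (/ eps))%Z.
  { apply le_IZR. pose proof (Rinv_0_lt_compat _ He). lra. }
  exists (Z.to_nat (up (/ eps))). intros n Hn.
  assert (INR (Z.to_nat (up (/ eps))) = IZR (up (/eps))) by (rewrite INR_IZR_INZ, Z2Nat.id; auto).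
  apply le_INR in Hn. rewrite H0 in Hn.
  assert (/ eps < INR n + 1) by lra.
  pose proof (Rinv_0_lt_compat _ He).
  rewrite <- (Rinv_inv eps). apply Rinv_lt_contravar; auto. nra.
Qed.

Lemma Un_cv_Rinv_INR_S (u : nat -> R) l : (forall n, Rabs (u n - l) < / (INR n + 1)) -> Un_cv u l.
Proof.
  intros H eps He. destruct (Rinv_INR_S_small eps He) as [N0 HN0]. exists N0. intros n Hn.
  unfold Rdist. specialize (H n). specialize (HN0 n ltac:(lia)). lra.
Qed.

Lemma strict_incr_lt (phi : nat -> nat) : (forall n, (phi n < phi (S n))%nat) ->
  forall m n, (m < n)%nat -> (phi m < phi n)%nat.
Proof.
  intros H m n Hmn. induction n; [lia|].
  destruct (Nat.eq_dec m n). subst; auto. specialize (IHn ltac:(lia)). specialize (H n). lia.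
Qed.

Lemma strict_incr_ge_id (phi : nat -> nat) : (forall n, (phi n < phi (S n))%nat) -> forall n, (n <= phi n)%nat.
Proof. intros H n; induction n; [lia|]. specialize (H n). lia. Qed.

Lemma Un_cv_subseq (u : nat -> R) l phi : (forall n, (phi n < phi (S n))%nat) -> Un_cv u l ->
  Un_cv (fun n => u (phi n)) l.
Proof.
  intros Hphi H eps He. destruct (H eps He) as [N0 HN0]. exists N0. intros n Hn.
  apply HN0. pose proof (strict_incr_ge_id phi Hphi n). lia.
Qed.

Lemma Un_cv_le_const (u : nat -> R) l M : Un_cv u l -> (forall n, u n <= M) -> l <= M.
Proof.
  intros H Hb. destruct (Rle_or_lt l M); auto.
  destruct (H (l - M)) as [n0 Hn0]. lra. specialize (Hn0 n0 (le_n _)). specialize (Hb n0).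
  unfold Rdist in Hn0. unfold Rabs in Hn0; destruct Rcase_abs in Hn0; lra.
Qed.

Lemma Un_cv_ge_const (u : nat -> R) l M : Un_cv u l -> (forall n, M <= u n) -> M <= l.
Proof.
  intros H Hb. destruct (Rle_or_lt M l); auto.
  destruct (H (M - l)) as [n0 Hn0]. lra. specialize (Hn0 n0 (le_n _)). specialize (Hb n0).
  unfold Rdist in Hn0. unfold Rabs in Hn0; destruct Rcase_abs in Hn0; lra.
Qed.

Lemma Un_cv_const_eq (u : nat -> R) l c : Un_cv u l -> (forall n, u n = c) -> l = c.
Proof.
  intros H Hc. apply (UL_sequence u); auto. intros e He. exists O. intros n _.
  rewrite Hc. unfold Rdist; rewrite Rminus_diag, Rabs_R0; lra.
Qed.

Lemma Un_cv_Rabs_le (u : nat -> R) l M : Un_cv u l -> (forall n, Rabs (u n) <= M) -> Rabs l <= M.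
Proof.
  intros H Hb. apply (Un_cv_le_const (fun n => Rabs (u n))); auto.
  apply (continuity_seq Rabs u l); auto. apply Rcontinuity_abs.
Qed.

Lemma bounded_cv_subseq (u : nat -> R) M : (forall n, Rabs (u n) <= M) ->
  exists phi : nat -> nat, (forall n, (phi n < phi (S n))%nat) /\ exists l, Un_cv (fun n => u (phi n)) l.
Proof.
  intros Hb.
  destruct (Bolzano_Weierstrass u (fun c => -M <= c <= M) (compact_P3 (-M) M)) as [l Hl].
  { intros n. specialize (Hb n). unfold Rabs in Hb; destruct Rcase_abs in Hb; lra. }
  assert (Hex : forall m n : nat, exists p : nat, (S m <= p)%nat /\ Rabs (u p - l) < / (INR n + 1)).
  { intros m n. assert (Hpos : 0 < / (INR n + 1)) by (apply Rinv_0_lt_compat; pose proof (pos_INR n); lra).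
    destruct (Hl (disc l (mkposreal _ Hpos)) (S m)) as [p [Hp1 Hp2]].
    2: exists p; split; auto.
    exists (mkposreal _ Hpos). intros y Hy. exact Hy. }
  set (g := fun m n => epsilon (inhabits 0%nat)
                         (fun p => (S m <= p)%nat /\ Rabs (u p - l) < / (INR n + 1))).
  assert (Hg : forall m n, (S m <= g m n)%nat /\ Rabs (u (g m n) - l) < / (INR n + 1)).
  { intros m n. unfold g.
    apply (epsilon_spec (inhabits 0%nat) (fun p => (S m <= p)%nat /\ Rabs (u p - l) < / (INR n + 1))).
    apply Hex. }
  set (phi := fix phi n := match n with O => g O O | S n' => g (phi n') (S n') end).
  exists phi. split.
  - intros n. simpl. destruct (Hg (phi n) (S n)). lia.
  - exists l. apply Un_cv_Rinv_INR_S. intros n. destruct n; simpl; apply Hg.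
Qed.

Lemma bounded_list_cv_subseq (L : list (grid2 -> R)) (s : nat -> grid2) M :
  (forall f, In f L -> forall n, Rabs (f (s n)) <= M) ->
  exists phi : nat -> nat, (forall n, (phi n < phi (S n))%nat) /\
    forall f, In f L -> exists l, Un_cv (fun n => f (s (phi n))) l.
Proof.
  induction L as [|f L IH]; intros Hb.
  - exists (fun n => n). split; [intros; lia|]. intros f [].
  - destruct IH as [phi1 [Hp1 Hc1]]. intros; apply Hb; simpl; auto.
    destruct (bounded_cv_subseq (fun n => f (s (phi1 n))) M) as [phi2 [Hp2 [l Hl]]].
    intros; apply Hb; simpl; auto.
    exists (fun n => phi1 (phi2 n)). split.
    + intros n. apply strict_incr_lt; auto.
    + intros f' [E|Hin].
      * subst. exists l. auto.
      * destruct (Hc1 f' Hin) as [l' Hl']. exists l'.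
        apply (Un_cv_subseq (fun n => f' (s (phi1 n))) l' phi2); auto.
Qed.

Definition cells (N : nat) : list (nat * nat * nat) :=
  flat_map (fun i => flat_map (fun j => map (fun k => (i, j, k)) (seq 1 N)) (seq 1 N)) (seq 1 N).

Lemma in_cells N i j k : in_grid N i -> in_grid N j -> in_grid N k -> In (i, j, k) (cells N).
Proof.
  unfold in_grid, cells; intros Hi Hj Hk.
  apply in_flat_map. exists i. split. apply in_seq; lia.
  apply in_flat_map. exists j. split. apply in_seq; lia.
  apply in_map_iff. exists k. split; auto. apply in_seq; lia.
Qed.

Definition fst_coord (c : nat * nat * nat) (p : grid2) : R := fst p (fst (fst c)) (snd (fst c)) (snd c).
Definition snd_coord (c : nat * nat * nat) (p : grid2) : R := snd p (fst (fst c)) (snd (fst c)) (snd c).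

Definition coords (N : nat) : list (grid2 -> R) := map fst_coord (cells N) ++ map snd_coord (cells N).

Lemma coords_bounded N C M (s : nat -> grid2) : bounded_on_grid N C M -> (forall n, C (s n)) ->
  forall f, In f (coords N) -> forall n, Rabs (f (s n)) <= M.
Proof.
  intros Hb Hs f Hf n. unfold coords in Hf. apply in_app_or in Hf.
  destruct Hf as [Hf|Hf]; apply in_map_iff in Hf; destruct Hf as [[[i j] k] [E Hin]]; subst;
  unfold fst_coord, snd_coord, cells in *; simpl;
  apply in_flat_map in Hin; destruct Hin as [i' [Hi Hin]];
  apply in_flat_map in Hin; destruct Hin as [j' [Hj Hin]];
  apply in_map_iff in Hin; destruct Hin as [k' [E Hk]]; inversion E; subst;
  apply in_seq in Hi, Hj, Hk; apply (Hb _ (Hs n)); unfold in_grid; lia.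
Qed.

Lemma minimizing_sequence {T : Type} (C : T -> Prop) (F : T -> R) p0 :
  C p0 -> (exists m, forall p, C p -> m <= F p) ->
  exists m (s : nat -> T), (forall p, C p -> m <= F p) /\ forall n, C (s n) /\ F (s n) < m + / (INR n + 1).
Proof.
  intros Hp0 [m Hm].
  set (E := fun r => exists p, C p /\ r = - F p).
  assert (HE1 : bound E). { exists (- m). intros r [p [Hp ->]]. specialize (Hm p Hp). lra. }
  assert (HE2 : exists r, E r). { exists (- F p0). exists p0. auto. }
  destruct (completeness E HE1 HE2) as [Msup [HM1 HM2]].
  assert (Hlow : forall p, C p -> - Msup <= F p).
  { intros p Hp. assert (E (- F p)) by (exists p; auto). specialize (HM1 _ H). lra. }
  assert (Hex : forall n : nat, exists p, C p /\ F p < - Msup + / (INR n + 1)).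
  { intros n. apply NNPP. intros Hn.
    assert (Hpos : 0 < / (INR n + 1)) by (apply Rinv_0_lt_compat; pose proof (pos_INR n); lra).
    assert (is_upper_bound E (Msup - / (INR n + 1))).
    { intros r [p [Hp ->]]. destruct (Rle_or_lt (- Msup + / (INR n + 1)) (F p)). lra.
      exfalso; apply Hn; exists p; auto. }
    specialize (HM2 _ H). lra. }
  exists (- Msup), (fun n => epsilon (inhabits p0) (fun p => C p /\ F p < - Msup + / (INR n + 1))).
  split; auto. intros n.
  apply (epsilon_spec (inhabits p0) (fun p => C p /\ F p < - Msup + / (INR n + 1))). apply Hex.
Qed.

(* Weierstrass on grid pairs: extract from a minimizing sequence, coordinate by coordinate,
   a subsequence converging at every cell. *)
Theorem seq_compact_has_min N C F M p0 : C p0 -> seq_closed N C -> bounded_on_grid N C M ->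
  seq_continuous_on N C F -> (exists m, forall p, C p -> m <= F p) ->
  exists p, C p /\ forall q, C q -> F p <= F q.
Proof.
  intros Hp0 Hcl Hb Hc Hm.
  destruct (minimizing_sequence C F p0 Hp0 Hm) as [m [s [Hlow Hs]]].
  destruct (bounded_list_cv_subseq (coords N) s M) as [phi [Hphi Hconv]].
  { apply (coords_bounded N C); auto. intros; apply Hs. }
  set (lim := fun u : nat -> R => epsilon (inhabits 0) (fun l => Un_cv u l)).
  assert (Hlim : forall u, (exists l, Un_cv u l) -> Un_cv u (lim u)).
  { intros u Hu. unfold lim. apply (epsilon_spec (inhabits 0) (fun l => Un_cv u l)). auto. }
  set (x := ((fun i j k => lim (fun n => fst (s (phi n)) i j k)),
             (fun i j k => lim (fun n => snd (s (phi n)) i j k)))).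
  assert (Hcx : cv_on_grid N (fun n => s (phi n)) x).
  { intros i j k Hi Hj Hk. split; simpl; apply Hlim.
    - apply (Hconv (fst_coord (i, j, k))). apply in_or_app. left. apply in_map, in_cells; auto.
    - apply (Hconv (snd_coord (i, j, k))). apply in_or_app. right. apply in_map, in_cells; auto. }
  assert (HCx : C x) by (apply (Hcl (fun n => s (phi n))); auto; intros; apply Hs).
  assert (HFx : Un_cv (fun n => F (s (phi n))) (F x)).
  { apply Hc; auto. intros; apply Hs. }
  assert (HFm : Un_cv (fun n => F (s (phi n))) m).
  { apply Un_cv_Rinv_INR_S. intros n. destruct (Hs (phi n)) as [Hs1 Hs2]. pose proof (Hlow _ Hs1).
    pose proof (strict_incr_ge_id phi Hphi n). apply le_INR in H0.
    assert (/ (INR (phi n) + 1) <= / (INR n + 1)).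
    { apply Rinv_le_contravar. pose proof (pos_INR n); lra. lra. }
    rewrite Rabs_right; lra. }
  pose proof (UL_sequence _ _ _ HFx HFm).
  exists x. split; auto. intros q Hq. rewrite H. apply Hlow; auto.
Qed.

Section SeqContinuity.
Variables (N : nat) (C : grid2 -> Prop).

Lemma seqc_const c : seq_continuous_on N C (fun _ => c).
Proof. intros s x _ _ _ e He. exists O. intros; unfold Rdist; rewrite Rminus_diag, Rabs_R0; lra. Qed.
Lemma seqc_plus F G : seq_continuous_on N C F -> seq_continuous_on N C G ->
  seq_continuous_on N C (fun p => F p + G p).
Proof. intros HF HG s x H1 H2 H3. apply CV_plus; auto. Qed.
Lemma seqc_minus F G : seq_continuous_on N C F -> seq_continuous_on N C G ->
  seq_continuous_on N C (fun p => F p - G p).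
Proof. intros HF HG s x H1 H2 H3. apply CV_minus; auto. Qed.
Lemma seqc_mult F G : seq_continuous_on N C F -> seq_continuous_on N C G ->
  seq_continuous_on N C (fun p => F p * G p).
Proof. intros HF HG s x H1 H2 H3. apply CV_mult; auto. Qed.
Lemma seqc_opp F : seq_continuous_on N C F -> seq_continuous_on N C (fun p => - F p).
Proof. intros HF s x H1 H2 H3. apply CV_opp; auto. Qed.
Lemma seqc_div F c : seq_continuous_on N C F -> seq_continuous_on N C (fun p => F p / c).
Proof. intros HF. unfold Rdiv. apply seqc_mult; auto. apply seqc_const. Qed.
Lemma seqc_pow2 F : seq_continuous_on N C F -> seq_continuous_on N C (fun p => F p ^ 2).
Proof. intros HF. simpl. apply seqc_mult; auto. apply seqc_mult; auto. apply seqc_const. Qed.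

Lemma seqc_comp (g : R -> R) F : seq_continuous_on N C F -> (forall p, C p -> continuity_pt g (F p)) ->
  seq_continuous_on N C (fun p => g (F p)).
Proof.
  intros HF Hg s x H1 H2 H3. apply (continuity_seq g (fun n => F (s n))). apply Hg; auto.
  apply HF; auto.
Qed.

Lemma seqc_sum3 (T : nat -> nat -> nat -> grid2 -> R) :
  (forall i j k, in_grid N i -> in_grid N j -> in_grid N k -> seq_continuous_on N C (T i j k)) ->
  seq_continuous_on N C (fun p => sum3 N (fun i j k => T i j k p)).
Proof.
  intros H s x H1 H2 H3. apply (sum3_Un_cv N (fun i j k m => T i j k (s m)) (fun i j k => T i j k x)).
  intros; apply H; auto.
Qed.

Lemma seqc_fst i j k : in_grid N i -> in_grid N j -> in_grid N k -> seq_continuous_on N C (fun p => fst p i j k).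
Proof. intros Hi Hj Hk s x H1 H2 H3. apply H3; auto. Qed.
Lemma seqc_snd i j k : in_grid N i -> in_grid N j -> in_grid N k -> seq_continuous_on N C (fun p => snd p i j k).
Proof. intros Hi Hj Hk s x H1 H2 H3. apply H3; auto. Qed.

Hypothesis HN : (1 <= N)%nat.

Lemma seqc_fst_gext i j k : seq_continuous_on N C (fun p => gext N (fst p) i j k).
Proof. intros s x H1 H2 H3. unfold gext. apply H3; apply cl_in_grid; auto. Qed.
Lemma seqc_snd_gext i j k : seq_continuous_on N C (fun p => gext N (snd p) i j k).
Proof. intros s x H1 H2 H3. unfold gext. apply H3; apply cl_in_grid; auto. Qed.

Lemma seqc_divDgrad_fst h D i j k : seq_continuous_on N C (fun p => divDgrad N h D (fst p) i j k).
Proof.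
  unfold divDgrad. cbv zeta.
  repeat first [apply seqc_const | apply seqc_plus | apply seqc_minus | apply seqc_mult
               | apply seqc_opp | apply seqc_div | apply seqc_fst_gext].
Qed.
Lemma seqc_divDgrad_snd h D i j k : seq_continuous_on N C (fun p => divDgrad N h D (snd p) i j k).
Proof.
  unfold divDgrad. cbv zeta.
  repeat first [apply seqc_const | apply seqc_plus | apply seqc_minus | apply seqc_mult
               | apply seqc_opp | apply seqc_div | apply seqc_snd_gext].
Qed.
End SeqContinuity.

Ltac seqc := repeat first [assumption
  | (apply seqc_divDgrad_fst; assumption) | (apply seqc_divDgrad_snd; assumption)
  | (apply seqc_fst; assumption) | (apply seqc_snd; assumption)
  | apply seqc_const | apply seqc_plus | apply seqc_minus | apply seqc_mult
  | apply seqc_opp | apply seqc_div | apply seqc_pow2].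


(** * The cell entropy *)

Module CellEntropy.
Import Coquelicot.Coquelicot.
Open Scope R_scope.

(* [Scell r x] is [S^{n+1/2}] at a cell with [rho^n = r] and [rho^{n+1} = x]. *)
Definition Scell (r x : R) : R := ln x - (x - r) / (2 * x) - (x - r) ^ 2 / (6 * x ^ 2).
Definition Fcell (r x : R) : R := x * ln x - 5/3 * x + 5 * r / 6 * ln x + r ^ 2 / (6 * x).
Definition dScell (r x : R) : R := / x - r / (2 * x ^ 2) - (x - r) * r / (3 * x ^ 3).

Lemma Fcell_derivable_pt_lim r x : 0 < x -> derivable_pt_lim (Fcell r) x (Scell r x).
Proof.
  intros Hx. apply is_derive_Reals. unfold Fcell.
  auto_derive. lra.
  unfold Scell. field. lra.
Qed.

Lemma Fcell_continuity_pt r x : 0 < x -> continuity_pt (Fcell r) x.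
Proof.
  intros. apply derivable_continuous_pt. exists (Scell r x). apply Fcell_derivable_pt_lim; auto.
Qed.

Lemma Scell_derivable_pt_lim r x : 0 < x -> derivable_pt_lim (Scell r) x (dScell r x).
Proof.
  intros Hx. apply is_derive_Reals. unfold Scell.
  auto_derive. repeat split; try nra.
  unfold dScell. field. lra.
Qed.

Lemma ln_le_sub1 y : 0 < y -> ln y <= y - 1.
Proof.
  intros Hy. rewrite <- (ln_exp (y - 1)). destruct (Req_dec y (exp (y-1))).
  rewrite <- H; lra. left. apply ln_increasing; auto.
  pose proof (exp_ineq1_le (y-1)). lra.
Qed.

Lemma ln_ge_tangent a x : 0 < a -> 0 < x -> 1 - a / x + ln a <= ln x.
Proof.
  intros Ha Hx. pose proof (ln_le_sub1 (a / x)).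
  assert (0 < a / x) by (apply Rdiv_lt_0_compat; auto).
  rewrite ln_div in H by auto. specialize (H H0). lra.
Qed.

Definition Fcell_shift (r : R) : R := exp (2/3) - 5 * r / 6 * (1 + ln (r / 10)).

(* The [r^2/(6x)] term makes [Fcell r] blow up at [0^+]; the tangent bounds for [ln]
   at [exp (2/3)] and at [r/10] absorb the other terms, leaving half of it. *)
Lemma Fcell_lower r x : 0 < r -> 0 < x -> r ^ 2 / (12 * x) - Fcell_shift r <= Fcell r x.
Proof.
  intros Hr Hx. unfold Fcell, Fcell_shift.
  pose proof (ln_ge_tangent (exp (2/3)) x (exp_pos _) Hx) as H1. rewrite ln_exp in H1.
  assert (Hr10 : 0 < r / 10) by lra.
  pose proof (ln_ge_tangent (r/10) x Hr10 Hx) as H2.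
  assert (A1 : x * (1 - exp (2/3) / x + 2/3) <= x * ln x) by (apply Rmult_le_compat_l; lra).
  assert (A2 : 5 * r / 6 * (1 - r / 10 / x + ln (r / 10)) <= 5 * r / 6 * ln x)
    by (apply Rmult_le_compat_l; lra).
  assert (E1 : x * (1 - exp (2/3) / x + 2/3) = 5/3 * x - exp (2/3)) by (field; lra).
  assert (E2 : 5 * r / 6 * (1 - r / 10 / x + ln (r / 10)) = 5 * r / 6 * (1 + ln (r/10)) - r^2/(12*x))
    by (field; lra).
  assert (E3 : r ^ 2 / (6 * x) = 2 * (r^2/(12*x))) by (field; lra).
  lra.
Qed.

Lemma Fcell_lower_abs r x : 0 < r -> 0 < x -> - Rabs (Fcell_shift r) <= Fcell r x.
Proof.
  intros Hr Hx. pose proof (Fcell_lower r x Hr Hx).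
  assert (0 <= r ^ 2 / (12 * x)).
  { apply Rmult_le_pos. apply pow2_ge_0. apply Rlt_le, Rinv_0_lt_compat; lra. }
  pose proof (Rle_abs (Fcell_shift r)). lra.
Qed.

Definition Fcell_barrier (r M : R) : R := Rmin r (r ^ 2 / (12 * (M + Rabs (Fcell_shift r) + 1))).

Lemma Fcell_barrier_spec r M : 0 < r -> 0 <= M ->
  0 < Fcell_barrier r M /\ Fcell_barrier r M <= r /\ M + 1 <= Fcell r (Fcell_barrier r M).
Proof.
  intros Hr HM. unfold Fcell_barrier. set (M' := M + Rabs (Fcell_shift r) + 1).
  assert (HM' : 0 < M') by (unfold M'; pose proof (Rabs_pos (Fcell_shift r)); lra).
  set (d := Rmin r (r ^ 2 / (12 * M'))).
  assert (Hq0 : 0 < r ^ 2 / (12 * M')) by (apply Rdiv_lt_0_compat; [apply pow_lt; auto|lra]).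
  assert (Hd0 : 0 < d) by (unfold d; apply Rmin_glb_lt; auto).
  split; auto. split. apply Rmin_l.
  pose proof (Fcell_lower r d Hr Hd0).
  assert (Hd1 : d <= r ^ 2 / (12 * M')) by apply Rmin_r.
  assert (M' <= r ^ 2 / (12 * d)).
  { apply (Rmult_le_reg_r (12 * d)). lra. unfold Rdiv. rewrite Rmult_assoc, Rinv_l by lra.
    rewrite Rmult_1_r. apply (Rmult_le_reg_r (/ (12 * M'))). apply Rinv_0_lt_compat; lra.
    replace (M' * (12 * d) * / (12 * M')) with d by (field; lra). auto. }
  pose proof (Rle_abs (Fcell_shift r)). unfold M' in H0. lra.
Qed.

Lemma dScell_pos r x : 0 < r -> 0 < x -> 0 < dScell r x.
Proof.
  intros Hr Hx. unfold dScell.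
  assert (E : / x - r / (2 * x ^ 2) - (x - r) * r / (3 * x ^ 3) = (x^2 - 5/6 * r * x + r^2/3) / x ^ 3)
    by (field; lra).
  rewrite E. apply Rdiv_lt_0_compat. 2: apply pow_lt; auto.
  replace (x ^ 2 - 5 / 6 * r * x + r ^ 2 / 3) with ((x - 5*r/12)*(x-5*r/12) + 23/144 * (r*r)) by field.
  pose proof (Rle_0_sqr (x - 5*r/12)) as Q1; unfold Rsqr in Q1. pose proof (Rmult_lt_0_compat r r Hr Hr).
  lra.
Qed.

Lemma Scell_increasing r a b : 0 < r -> 0 < a -> a < b -> Scell r a < Scell r b.
Proof.
  intros Hr Ha Hab.
  destruct (MVT_cor2 (Scell r) (dScell r) a b Hab) as [c [Hc1 Hc2]].
  intros; apply Scell_derivable_pt_lim; lra.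
  pose proof (dScell_pos r c Hr ltac:(lra)). nra.
Qed.

Lemma Scell_monotone r a b : 0 < r -> 0 < a -> 0 < b -> 0 <= (Scell r a - Scell r b) * (a - b).
Proof.
  intros Hr Ha Hb. destruct (Rtotal_order a b) as [H|[H|H]].
  - pose proof (Scell_increasing r a b Hr Ha H). nra.
  - subst; nra.
  - pose proof (Scell_increasing r b a Hr Hb H). nra.
Qed.

Lemma Scell_monotone_eq0 r a b : 0 < r -> 0 < a -> 0 < b ->
  (Scell r a - Scell r b) * (a - b) = 0 -> a = b.
Proof.
  intros Hr Ha Hb H. destruct (Rtotal_order a b) as [H1|[H1|H1]]; auto.
  - pose proof (Scell_increasing r a b Hr Ha H1). nra.
  - pose proof (Scell_increasing r b a Hr Hb H1). nra.
Qed.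

Lemma cell_v_derivable_pt_lim (g r X a c0 chi u C1 dt v e Av : R) : 0 < X -> dt <> 0 ->
  derivable_pt_lim (fun t => g * Fcell r (X + t * a) + c0 / 2 * (X + t * a - r) ^ 2
     - chi / 2 * u * (X + t * a) + C1 - 1 / (2 * dt) * (v + t * e) * (Av + t * a)) 0
   (g * Scell r X * a + c0 * (X - r) * a - chi / 2 * u * a - 1 / (2 * dt) * (e * Av + v * a)).
Proof.
  intros HX Hdt. apply is_derive_Reals. unfold Fcell.
  auto_derive. repeat split; try lra; rewrite Rmult_0_l, Rplus_0_r; lra.
  rewrite Rmult_0_l, Rplus_0_r. unfold Scell. field. lra.
Qed.

Lemma cell_u_derivable_pt_lim (C0 chi e X kap u mu Lu Le rr : R) :
  derivable_pt_lim (fun t => C0 - chi / 2 * (u + t * e) * X + kap / 2 * (u + t * e) ^ 2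
     - mu / 4 * (u + t * e) * (Lu + t * Le) - rr * (u + t * e)) 0
   (- chi / 2 * e * X + kap * u * e - mu / 4 * (e * Lu + u * Le) - rr * e).
Proof. apply is_derive_Reals. auto_derive. auto. field. Qed.

Lemma half_sq_derivable_pt_lim (A B : R) :
  derivable_pt_lim (fun t => 1 / 2 * (A + t * B) ^ 2) 0 (A * B).
Proof. apply is_derive_Reals. auto_derive. auto. field. Qed.

End CellEntropy.
Import CellEntropy.

Lemma interior_min_derivative (f : R -> R) l eps : 0 < eps -> derivable_pt_lim f 0 l ->
  (forall t, - eps < t < eps -> f 0 <= f t) -> l = 0.
Proof.
  intros He Hd Hm.
  assert (pr : derivable_pt f 0) by (exists l; auto).
  pose proof (deriv_minimum f (- eps) eps 0 pr ltac:(lra) He ltac:(intros; apply Hm; lra)).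
  rewrite <- H. symmetry. apply derive_pt_eq_0. auto.
Qed.

Lemma Rabs_lt_of_sq_le x M : x ^ 2 <= M -> 0 <= M -> Rabs x < 2 + M.
Proof.
  intros H HM. destruct (Rle_or_lt (Rabs x) 1). lra.
  assert (Rabs x ^ 2 = x ^ 2) by (rewrite RPow_abs; apply Rabs_right; apply Rle_ge, pow2_ge_0).
  assert (Rabs x <= Rabs x ^ 2).
  { simpl. rewrite Rmult_1_r. pattern (Rabs x) at 1; rewrite <- Rmult_1_r.
    apply Rmult_le_compat_l; [apply Rabs_pos|lra]. }
  lra.
Qed.

Lemma Rabs_le1_of_sq x : x * x <= 1 -> Rabs x <= 1.
Proof. intros H. unfold Rabs; destruct Rcase_abs; nra. Qed.

(** * Reformulation of the scheme and uniqueness *)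

Definition zero_grid : grid := fun _ _ _ => 0.

Section Scheme.
Variables (a b : R) (N : nat) (gamma mu alpha chi theta dt : R) (rho_prev rho_n phi_n : grid).
Hypotheses (Hab : a < b) (HN : (1 <= N)%nat) (Hg : 0 < gamma) (Hmu : 0 < mu) (Hal : 0 < alpha)
  (Hchi : 0 < chi) (Hth : 0 < theta) (Hdt : 0 < dt) (Hrho : grid_pos N rho_n).

Definition hmesh := mesh a b N.
Definition mobility := rhohat dt rho_prev rho_n.
Definition Amob (f : grid) := divDgrad N hmesh mobility f.
Definition Lap (f : grid) := divDgrad N hmesh (fun _ _ _ => 1) f.

Lemma hmesh_pos : 0 < hmesh.
Proof. unfold hmesh, mesh. apply Rdiv_lt_0_compat. lra. apply lt_0_INR; lia. Qed.

Lemma hmesh_neq0 : hmesh <> 0.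
Proof. pose proof hmesh_pos; lra. Qed.

Lemma mobility_pos i j k : 0 < mobility i j k.
Proof.
  unfold mobility, rhohat. apply sqrt_lt_R0.
  assert (0 < dt ^ 8) by (apply pow_lt; auto).
  pose proof (pow2_ge_0 (3 / 2 * rho_n i j k - 1 / 2 * rho_prev i j k)). lra.
Qed.

Lemma sum3_mul_Amob_sym z f :
  sum3 N (fun i j k => z i j k * Amob f i j k) = sum3 N (fun i j k => f i j k * Amob z i j k).
Proof. apply sum3_mul_divDgrad_sym; auto using hmesh_neq0. Qed.

Lemma sum3_mul_Lap_sym z f :
  sum3 N (fun i j k => z i j k * Lap f i j k) = sum3 N (fun i j k => f i j k * Lap z i j k).
Proof. apply sum3_mul_divDgrad_sym; auto using hmesh_neq0. Qed.

Lemma sum3_mul_Amob_self_nonpos v : sum3 N (fun i j k => v i j k * Amob v i j k) <= 0.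
Proof. apply sum3_mul_divDgrad_self_nonpos; auto using hmesh_neq0, mobility_pos. Qed.

Lemma sum3_mul_Lap_self_nonpos u : sum3 N (fun i j k => u i j k * Lap u i j k) <= 0.
Proof. apply sum3_mul_divDgrad_self_nonpos; auto using hmesh_neq0. intros; lra. Qed.

Definition qform (v : grid) : R :=
  - (1 / dt) * sum3 N (fun i j k => v i j k * Amob v i j k) + (sum3 N v) ^ 2.

Lemma qform_nonneg v : 0 <= qform v.
Proof.
  unfold qform. pose proof (sum3_mul_Amob_self_nonpos v).
  assert (0 < 1/dt) by (apply Rdiv_lt_0_compat; lra).
  pose proof (pow2_ge_0 (sum3 N v)). nra.
Qed.

Lemma qform_scal t v : qform (fun i j k => t * v i j k) = t ^ 2 * qform v.
Proof.
  unfold qform, Amob.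
  rewrite (sum3_ext N _ (fun i j k => (t * t) * (v i j k * divDgrad N hmesh mobility v i j k))).
  rewrite sum3_scal, sum3_scal. ring.
  intros. rewrite divDgrad_scal. ring.
Qed.

Lemma qform_eq0 v : qform v = 0 -> forall i j k, in_grid N i -> in_grid N j -> in_grid N k -> v i j k = 0.
Proof.
  intros Hq.
  pose proof (sum3_mul_Amob_self_nonpos v). pose proof (pow2_ge_0 (sum3 N v)).
  assert (0 < 1/dt) by (apply Rdiv_lt_0_compat; lra).
  assert (E1 : sum3 N (fun i j k => v i j k * Amob v i j k) = 0) by (unfold qform in Hq; nra).
  assert (E2 : sum3 N v = 0).
  { unfold qform in Hq. rewrite E1 in Hq. assert (sum3 N v ^ 2 = 0) by lra. nra. }
  pose proof (sum3_mul_divDgrad_self_eq0 N hmesh mobility HN hmesh_neq0 mobility_pos v E1) as Hc.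
  assert (Hv1 : v 1%nat 1%nat 1%nat = 0).
  { apply (sum3_const_eq0 N); auto. rewrite <- E2. apply sum3_ext; intros. symmetry; apply Hc; auto. }
  intros i j k Hi Hj Hk. rewrite Hc; auto.
Qed.

Lemma qform_coercive_of_sphere m : (forall w, sum3 N (fun i j k => w i j k ^ 2) = 1 -> m <= qform w) ->
  forall v, m * sum3 N (fun i j k => v i j k ^ 2) <= qform v.
Proof.
  intros Hm v. set (S := sum3 N (fun i j k => v i j k ^ 2)).
  destruct (sum3_sq_nonneg N v) as [HS|HS]; fold S in HS.
  2:{ rewrite <- HS. rewrite Rmult_0_r. apply qform_nonneg. }
  set (t := / sqrt S).
  assert (Hsq : 0 < sqrt S) by (apply sqrt_lt_R0; auto).
  assert (Ht2 : t ^ 2 * S = 1).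
  { unfold t. simpl. rewrite Rmult_1_r. rewrite <- Rinv_mult. rewrite sqrt_sqrt by lra. field. lra. }
  assert (Hw : sum3 N (fun i j k => (t * v i j k) ^ 2) = 1).
  { rewrite <- Ht2. unfold S. rewrite <- sum3_scal. apply sum3_ext; intros; ring. }
  pose proof (Hm _ Hw) as H. rewrite qform_scal in H.
  assert (qform v = S * (t ^ 2 * qform v)) by (rewrite <- Rmult_assoc, (Rmult_comm S), Ht2; ring).
  rewrite H0. rewrite (Rmult_comm m). apply Rmult_le_compat_l; lra.
Qed.

Lemma qform_coercive : exists lam, 0 < lam /\ forall v, lam * sum3 N (fun i j k => v i j k ^ 2) <= qform v.
Proof.
  set (Cs := fun p : grid2 => (forall i j k, in_grid N i -> in_grid N j -> in_grid N k ->
                Rabs (fst p i j k) <= 1 /\ Rabs (snd p i j k) <= 1)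
                /\ sum3 N (fun i j k => fst p i j k ^ 2) = 1).
  assert (Hin : in_grid N 1) by (unfold in_grid; lia).
  assert (Hs2 : seq_continuous_on N (fun _ => True) (fun p => sum3 N (fun i j k => fst p i j k ^ 2))).
  { apply seqc_sum3; intros. apply seqc_pow2. apply seqc_fst; auto. }
  destruct (seq_compact_has_min N Cs (fun p => qform (fst p)) 1 (delta3 1 1 1, zero_grid))
    as [ps [Hps Hmin]].
  - split.
    + intros; simpl. split. pose proof (delta3_bound 1 1 1 i j k). rewrite Rabs_right; lra.
      unfold zero_grid; rewrite Rabs_R0; lra.
    + simpl. transitivity (sum3 N (fun i j k => delta3 1 1 1 i j k * delta3 1 1 1 i j k)).
      apply sum3_ext; intros; ring. rewrite sum3_delta3_mul by auto.
      unfold delta3; repeat destruct Nat.eq_dec; try congruence; lra.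
  - intros s x Hs Hc. split.
    + intros i j k Hi Hj Hk. destruct (Hc i j k Hi Hj Hk) as [H1 H2]. split.
      apply (Un_cv_Rabs_le _ _ _ H1). intros; apply (Hs n); auto.
      apply (Un_cv_Rabs_le _ _ _ H2). intros; apply (Hs n); auto.
    + apply (Un_cv_const_eq (fun n => sum3 N (fun i j k => fst (s n) i j k ^ 2))).
      apply (Hs2 s x); auto. intros; apply Hs.
  - intros p Hp. apply Hp.
  - assert (Hq : seq_continuous_on N (fun _ => True) (fun p => qform (fst p))).
    { unfold qform, Amob. apply seqc_plus; [apply seqc_mult; [apply seqc_const|]|apply seqc_pow2].
      - apply seqc_sum3; intros. apply seqc_mult. apply seqc_fst; auto. apply seqc_divDgrad_fst; auto.
      - apply seqc_sum3; intros; apply seqc_fst; auto. }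
    intros s x H1 H2 H3. apply Hq; auto.
  - exists 0. intros; apply qform_nonneg.
  - exists (qform (fst ps)). split.
    + destruct (qform_nonneg (fst ps)) as [Hl|Hl]; auto. exfalso.
      destruct Hps as [_ Hps].
      rewrite (sum3_ext N _ (fun _ _ _ => 0)) in Hps. rewrite sum3_const in Hps. lra.
      intros. rewrite (qform_eq0 (fst ps)) by auto. ring.
    + apply qform_coercive_of_sphere. intros w Hw. apply (Hmin (w, zero_grid)). split; auto.
      intros i j k Hi Hj Hk. cbn [fst snd]. split; [|unfold zero_grid; rewrite Rabs_R0; lra].
      apply Rabs_le1_of_sq. rewrite <- Hw. rewrite <- (Rmult_1_r (w i j k)) at 2.
      replace (w i j k * (w i j k * 1)) with (w i j k ^ 2) by ring. apply sum3_sq_ge_term; auto.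
Qed.

Definition stab := chi ^ 2 * dt / (4 * theta).
Definition kappa := theta / dt + alpha / 2.
Definition phi_source (i j k : nat) := 2 * theta / dt * phi_n i j k + chi / 2 * rho_n i j k.
Definition helm (u : grid) (i j k : nat) := kappa * u i j k - mu / 2 * Lap u i j k.

Lemma scheme_iff rho1 phi1 :
  scheme a b N gamma mu alpha chi theta dt rho_prev rho_n phi_n rho1 phi1 <->
  forall i j k, in_grid N i -> in_grid N j -> in_grid N k ->
    rho1 i j k = rho_n i j k + dt * Amob (potential gamma chi theta dt rho_n phi_n rho1 phi1) i j k
    /\ helm (fun i j k => phi1 i j k + phi_n i j k) i j k = chi / 2 * rho1 i j k + phi_source i j k.
Proof.
  unfold scheme, helm, kappa, phi_source, Lap, Amob, hmesh, mobility. cbv zeta.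
  split; intros H i j k Hi Hj Hk; destruct (H i j k Hi Hj Hk) as [H1 H2];
    rewrite lap_divDgrad in * by apply hmesh_neq0;
    replace (theta * ((phi1 i j k - phi_n i j k) / dt))
      with (theta / dt * phi1 i j k - theta / dt * phi_n i j k) in * by (field; lra);
    split; try lra.
  - rewrite <- H1. field. lra.
  - rewrite H1 at 1. field. lra.
Qed.

Lemma helm_ext u1 u2 i j k : (forall i j k, u1 i j k = u2 i j k) -> helm u1 i j k = helm u2 i j k.
Proof. intros H. unfold helm, Lap. rewrite H. f_equal. f_equal. apply divDgrad_ext; auto. Qed.

Lemma helm_minus u1 u2 i j k :
  helm (fun i j k => u1 i j k - u2 i j k) i j k = helm u1 i j k - helm u2 i j k.
Proof. unfold helm, Lap. rewrite divDgrad_minus. ring. Qed.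

Lemma sum3_mul_helm u : sum3 N (fun i j k => u i j k * helm u i j k)
  = kappa * sum3 N (fun i j k => u i j k ^ 2) - mu / 2 * sum3 N (fun i j k => u i j k * Lap u i j k).
Proof.
  rewrite <- !sum3_scal, <- sum3_minus. apply sum3_ext; intros. unfold helm. ring.
Qed.

Lemma sum3_mul_helm_nonpos_eq0 u : sum3 N (fun i j k => u i j k * helm u i j k) <= 0 ->
  forall i j k, in_grid N i -> in_grid N j -> in_grid N k -> u i j k = 0.
Proof.
  intros H i j k Hi Hj Hk. rewrite sum3_mul_helm in H.
  pose proof (sum3_mul_Lap_self_nonpos u).
  assert (0 < kappa) by (unfold kappa; apply Rplus_lt_0_compat; [apply Rdiv_lt_0_compat|]; lra).
  pose proof (sum3_sq_nonneg N u).
  assert (Hu : sum3 N (fun i j k => u i j k ^ 2) <= 0) by nra.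
  pose proof (sum3_nonneg_eq0 N (fun i j k => u i j k ^ 2) ltac:(intros; apply pow2_ge_0) Hu i j k Hi Hj Hk).
  cbv beta in H2. nra.
Qed.

(* Completing the square: [B^2 / beta - u B = (B - beta u)^2 / beta + alpha/2 u^2 - mu/2 u Lap u]
   for [B = helm u] and [beta = theta / dt]. *)
Lemma sum3_helm_pairing_nonneg u :
  0 <= sum3 N (fun i j k => / (theta / dt) * helm u i j k ^ 2 - u i j k * helm u i j k).
Proof.
  set (be := theta / dt). assert (Hbe : 0 < be) by (unfold be; apply Rdiv_lt_0_compat; lra).
  rewrite (sum3_ext N _ (fun i j k => (/ be * (helm u i j k - be * u i j k) ^ 2 + alpha / 2 * u i j k ^ 2)
                                     + (- mu / 2) * (u i j k * Lap u i j k))).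
  - rewrite sum3_plus, sum3_scal. pose proof (sum3_mul_Lap_self_nonpos u).
    assert (0 <= sum3 N (fun i j k => / be * (helm u i j k - be * u i j k) ^ 2 + alpha / 2 * u i j k ^ 2)).
    { apply sum3_nonneg; intros. assert (0 < / be) by (apply Rinv_0_lt_compat; auto).
      pose proof (pow2_ge_0 (helm u i j k - be * u i j k)). pose proof (pow2_ge_0 (u i j k)). nra. }
    nra.
  - intros. unfold helm, kappa, be. field. lra.
Qed.

Lemma potential_minus rho1 phi1 rho2 phi2 i j k :
  potential gamma chi theta dt rho_n phi_n rho1 phi1 i j k - potential gamma chi theta dt rho_n phi_n rho2 phi2 i j k
  = gamma * (Scell (rho_n i j k) (rho1 i j k) - Scell (rho_n i j k) (rho2 i j k))
    - chi / 2 * (phi1 i j k - phi2 i j k) + stab * (rho1 i j k - rho2 i j k).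
Proof. unfold potential, Shalf, Scell, stab. ring. Qed.

Lemma scheme_helm_diff rho1 phi1 rho2 phi2 :
  scheme a b N gamma mu alpha chi theta dt rho_prev rho_n phi_n rho1 phi1 ->
  scheme a b N gamma mu alpha chi theta dt rho_prev rho_n phi_n rho2 phi2 ->
  forall i j k, in_grid N i -> in_grid N j -> in_grid N k ->
    helm (fun i j k => phi1 i j k - phi2 i j k) i j k = chi / 2 * (rho1 i j k - rho2 i j k).
Proof.
  rewrite !scheme_iff. intros S1 S2 i j k Hi Hj Hk.
  destruct (S1 i j k Hi Hj Hk) as [_ B1]. destruct (S2 i j k Hi Hj Hk) as [_ B2].
  rewrite (helm_ext _ (fun i j k => (phi1 i j k + phi_n i j k) - (phi2 i j k + phi_n i j k))) by (intros; ring).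
  rewrite helm_minus, B1, B2. ring.
Qed.

Lemma scheme_unique_rho rho1 phi1 rho2 phi2 :
  scheme a b N gamma mu alpha chi theta dt rho_prev rho_n phi_n rho1 phi1 -> grid_pos N rho1 ->
  scheme a b N gamma mu alpha chi theta dt rho_prev rho_n phi_n rho2 phi2 -> grid_pos N rho2 ->
  grid_eq N rho1 rho2.
Proof.
  intros S1 P1 S2 P2. pose proof (scheme_helm_diff _ _ _ _ S1 S2) as Edu.
  rewrite scheme_iff in S1, S2.
  set (dx := fun i j k => rho1 i j k - rho2 i j k) in *.
  set (du := fun i j k => phi1 i j k - phi2 i j k) in *.
  set (dw := fun i j k => potential gamma chi theta dt rho_n phi_n rho1 phi1 i j k
                         - potential gamma chi theta dt rho_n phi_n rho2 phi2 i j k).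
  set (dS := fun i j k => gamma * (Scell (rho_n i j k) (rho1 i j k) - Scell (rho_n i j k) (rho2 i j k))).
  assert (Edx : forall i j k, in_grid N i -> in_grid N j -> in_grid N k -> dx i j k = dt * Amob dw i j k).
  { intros i j k Hi Hj Hk. destruct (S1 i j k Hi Hj Hk) as [A1 _]. destruct (S2 i j k Hi Hj Hk) as [A2 _].
    unfold dw, Amob. rewrite divDgrad_minus. unfold dx. fold (Amob (potential gamma chi theta dt rho_n phi_n rho1 phi1)).
    fold (Amob (potential gamma chi theta dt rho_n phi_n rho2 phi2)). lra. }
  assert (HP : sum3 N (fun i j k => dx i j k * dw i j k) <= 0).
  { rewrite (sum3_ext N _ (fun i j k => dt * (dw i j k * Amob dw i j k))).
    rewrite sum3_scal. pose proof (sum3_mul_Amob_self_nonpos dw). nra.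
    intros. rewrite Edx by auto. ring. }
  assert (HS : sum3 N (fun i j k => dS i j k * dx i j k) <= 0).
  { assert (sum3 N (fun i j k => dx i j k * dw i j k) = sum3 N (fun i j k => dS i j k * dx i j k)
       + sum3 N (fun i j k => / (theta / dt) * helm du i j k ^ 2 - du i j k * helm du i j k)).
    { rewrite <- sum3_plus. apply sum3_ext; intros. unfold dw. rewrite potential_minus.
      rewrite Edu by auto. unfold dS, dx, du, stab. field. lra. }
    pose proof (sum3_helm_pairing_nonneg du). lra. }
  intros i j k Hi Hj Hk.
  assert (HT : dS i j k * dx i j k = 0).
  { apply (sum3_nonneg_eq0 N (fun i j k => dS i j k * dx i j k)); auto. intros.
    unfold dS. rewrite Rmult_assoc. apply Rmult_le_pos; [lra|]. apply Scell_monotone; auto. }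
  apply (Scell_monotone_eq0 (rho_n i j k)); auto.
  unfold dS, dx in HT. rewrite Rmult_assoc in HT. apply Rmult_integral in HT. destruct HT; lra.
Qed.

Lemma scheme_unique rho1 phi1 rho2 phi2 :
  scheme a b N gamma mu alpha chi theta dt rho_prev rho_n phi_n rho1 phi1 -> grid_pos N rho1 ->
  scheme a b N gamma mu alpha chi theta dt rho_prev rho_n phi_n rho2 phi2 -> grid_pos N rho2 ->
  grid_eq N rho1 rho2 /\ grid_eq N phi1 phi2.
Proof.
  intros S1 P1 S2 P2. pose proof (scheme_unique_rho _ _ _ _ S1 P1 S2 P2) as Hx.
  split; auto.
  assert (Hu : forall i j k, in_grid N i -> in_grid N j -> in_grid N k -> phi1 i j k - phi2 i j k = 0).
  { apply (sum3_mul_helm_nonpos_eq0 (fun i j k => phi1 i j k - phi2 i j k)). right.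
    rewrite (sum3_ext N _ (fun _ _ _ => 0)). rewrite sum3_const; ring.
    intros. rewrite (scheme_helm_diff _ _ _ _ S1 S2) by auto. rewrite Hx by auto. ring. }
  intros i j k Hi Hj Hk. specialize (Hu i j k Hi Hj Hk). lra.
Qed.

(** * Existence by minimization *)

Definition rho_of (v : grid) (i j k : nat) := rho_n i j k + Amob v i j k.

Definition rho_of_pos (v : grid) := forall i j k, in_grid N i -> in_grid N j -> in_grid N k -> 0 < rho_of v i j k.

Definition cell_energy (v u : grid) (i j k : nat) :=
  gamma * Fcell (rho_n i j k) (rho_of v i j k) + stab / 2 * (rho_of v i j k - rho_n i j k) ^ 2
  - chi / 2 * u i j k * rho_of v i j k
  + (kappa / 2 * u i j k ^ 2 - mu / 4 * u i j k * Lap u i j k - phi_source i j k * u i j k)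
  - 1 / (2 * dt) * v i j k * Amob v i j k.

(* The scheme is the Euler-Lagrange system of [Kfun] for [rho^{n+1} = rho_of v], [phi^{n+1} = u - phi^n]. *)
Definition Kfun (p : grid2) := sum3 N (cell_energy (fst p) (snd p)) + 1 / 2 * (sum3 N (fst p)) ^ 2.

Definition src_bound (i j k : nat) := 2 * (chi / 2 * rho_n i j k + phi_source i j k) ^ 2 / alpha.

Definition Kfun_shift := sum3 N (fun i j k => gamma * Rabs (Fcell_shift (rho_n i j k)) + src_bound i j k).

Lemma src_bound_nonneg i j k : 0 <= src_bound i j k.
Proof.
  unfold src_bound. apply Rmult_le_pos.
  pose proof (pow2_ge_0 (chi / 2 * rho_n i j k + phi_source i j k)); lra.
  apply Rlt_le, Rinv_0_lt_compat; lra.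
Qed.

Lemma Kfun_shift_nonneg : 0 <= Kfun_shift.
Proof.
  unfold Kfun_shift. apply sum3_nonneg; intros.
  pose proof (src_bound_nonneg i j k). pose proof (Rabs_pos (Fcell_shift (rho_n i j k))). nra.
Qed.

Lemma cell_energy_lower v u i j k :
  gamma * Fcell (rho_n i j k) (rho_of v i j k) + alpha / 8 * u i j k ^ 2 - src_bound i j k
    - mu / 4 * u i j k * Lap u i j k - 1 / (2 * dt) * v i j k * Amob v i j k
  <= cell_energy v u i j k.
Proof.
  unfold cell_energy. set (X := rho_of v i j k - rho_n i j k). set (U := u i j k).
  set (B := chi / 2 * rho_n i j k + phi_source i j k).
  replace (rho_of v i j k) with (X + rho_n i j k) by (unfold X; ring).
  assert (E1 : stab / 2 * X ^ 2 - chi / 2 * U * X + theta / (2 * dt) * U ^ 2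
               = theta / (2 * dt) * (U - chi * dt / (2 * theta) * X) ^ 2)
    by (unfold stab; field; lra).
  assert (E2 : alpha / 8 * U ^ 2 - B * U + src_bound i j k = alpha / 8 * (U - 4 * B / alpha) ^ 2)
    by (unfold src_bound, B; field; lra).
  assert (P1 : 0 <= theta / (2 * dt) * (U - chi * dt / (2 * theta) * X) ^ 2).
  { apply Rmult_le_pos. apply Rlt_le, Rdiv_lt_0_compat; lra. apply pow2_ge_0. }
  assert (P2 : 0 <= alpha / 8 * (U - 4 * B / alpha) ^ 2).
  { apply Rmult_le_pos. lra. apply pow2_ge_0. }
  assert (E3 : kappa / 2 * U ^ 2 = theta / (2 * dt) * U ^ 2 + alpha / 8 * U ^ 2 + alpha / 8 * U ^ 2)
    by (unfold kappa; field; lra).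
  unfold B in E2, P2. lra.
Qed.

Lemma Kfun_lower (v u : grid) : rho_of_pos v ->
  sum3 N (fun i j k => gamma * Fcell (rho_n i j k) (rho_of v i j k) + alpha / 8 * u i j k ^ 2 - src_bound i j k)
    + 1 / 2 * qform v <= Kfun (v, u).
Proof.
  intros Hx. unfold Kfun, qform. cbn [fst snd].
  assert (H1 : sum3 N (fun i j k =>
      (gamma * Fcell (rho_n i j k) (rho_of v i j k) + alpha / 8 * u i j k ^ 2 - src_bound i j k)
      + (- mu / 4) * (u i j k * Lap u i j k) + (- 1 / (2 * dt)) * (v i j k * Amob v i j k))
      <= sum3 N (cell_energy v u)).
  { apply sum3_le. intros. pose proof (cell_energy_lower v u i j k). unfold Rdiv in *. lra. }
  rewrite !sum3_plus, !sum3_scal in H1. pose proof (sum3_mul_Lap_self_nonpos u).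
  assert (0 <= mu / 4 * (- sum3 N (fun i j k => u i j k * Lap u i j k))) by (apply Rmult_le_pos; lra).
  replace (-1 / (2 * dt)) with (1 / 2 * (- (1 / dt))) in H1 by (field; lra).
  replace (- mu / 4) with (- (mu / 4)) in H1 by field.
  lra.
Qed.

Lemma Fcell_rho_of_lower v i j k : rho_of_pos v -> in_grid N i -> in_grid N j -> in_grid N k ->
  - Rabs (Fcell_shift (rho_n i j k)) <= Fcell (rho_n i j k) (rho_of v i j k).
Proof. intros Hx Hi Hj Hk. apply Fcell_lower_abs; auto. Qed.

Lemma Kfun_coercive lam (v u : grid) : rho_of_pos v ->
  (forall v, lam * sum3 N (fun i j k => v i j k ^ 2) <= qform v) ->
  alpha / 8 * sum3 N (fun i j k => u i j k ^ 2) + lam / 2 * sum3 N (fun i j k => v i j k ^ 2) - Kfun_shift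
    <= Kfun (v, u).
Proof.
  intros Hx Hq. pose proof (Kfun_lower v u Hx). specialize (Hq v).
  assert (alpha / 8 * sum3 N (fun i j k => u i j k ^ 2) - Kfun_shift <=
    sum3 N (fun i j k => gamma * Fcell (rho_n i j k) (rho_of v i j k) + alpha / 8 * u i j k ^ 2 - src_bound i j k)).
  { unfold Kfun_shift. rewrite <- sum3_scal, <- sum3_minus. apply sum3_le. intros.
    pose proof (Fcell_rho_of_lower v i j k Hx H0 H1 H2). nra. }
  lra.
Qed.

Lemma Kfun_ge_cell (v u : grid) i0 j0 k0 : rho_of_pos v -> in_grid N i0 -> in_grid N j0 -> in_grid N k0 ->
  gamma * Fcell (rho_n i0 j0 k0) (rho_of v i0 j0 k0) - Kfun_shift <= Kfun (v, u).
Proof.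
  intros Hx Hi Hj Hk. pose proof (Kfun_lower v u Hx). pose proof (qform_nonneg v).
  set (w := fun i j k => gamma * Fcell (rho_n i j k) (rho_of v i j k) + alpha / 8 * u i j k ^ 2
                         + gamma * Rabs (Fcell_shift (rho_n i j k))).
  assert (Hw : forall i j k, in_grid N i -> in_grid N j -> in_grid N k -> 0 <= w i j k).
  { intros. unfold w. pose proof (Fcell_rho_of_lower v i j k Hx H1 H2 H3).
    pose proof (pow2_ge_0 (u i j k)). nra. }
  assert (E : sum3 N (fun i j k => gamma * Fcell (rho_n i j k) (rho_of v i j k) + alpha / 8 * u i j k ^ 2
                                   - src_bound i j k) = sum3 N w - Kfun_shift).
  { unfold Kfun_shift. rewrite <- sum3_minus. apply sum3_ext; intros. unfold w. ring. }
  pose proof (sum3_ge_term N w i0 j0 k0 Hw Hi Hj Hk). unfold w in H1 at 1.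
  pose proof (pow2_ge_0 (u i0 j0 k0)). pose proof (Rabs_pos (Fcell_shift (rho_n i0 j0 k0))).
  rewrite E in H. nra.
Qed.

Lemma Amob_plus_scal v e t i j k : Amob (fun i j k => v i j k + t * e i j k) i j k = Amob v i j k + t * Amob e i j k.
Proof. apply divDgrad_plus_scal. Qed.
Lemma Lap_plus_scal v e t i j k : Lap (fun i j k => v i j k + t * e i j k) i j k = Lap v i j k + t * Lap e i j k.
Proof. apply divDgrad_plus_scal. Qed.
Lemma rho_of_plus_scal v e t i j k :
  rho_of (fun i j k => v i j k + t * e i j k) i j k = rho_of v i j k + t * Amob e i j k.
Proof. unfold rho_of. rewrite Amob_plus_scal. ring. Qed.

Lemma Kfun_v_derivable_pt_lim (v u e : grid) : rho_of_pos v ->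
  derivable_pt_lim (fun t => Kfun (fun i j k => v i j k + t * e i j k, u)) 0
   (sum3 N (fun i j k => gamma * Scell (rho_n i j k) (rho_of v i j k) * Amob e i j k
        + stab * (rho_of v i j k - rho_n i j k) * Amob e i j k - chi / 2 * u i j k * Amob e i j k
        - 1 / (2 * dt) * (e i j k * Amob v i j k + v i j k * Amob e i j k)) + sum3 N v * sum3 N e).
Proof.
  intros Hx.
  set (cell := fun i j k t =>
      gamma * Fcell (rho_n i j k) (rho_of v i j k + t * Amob e i j k)
      + stab / 2 * (rho_of v i j k + t * Amob e i j k - rho_n i j k) ^ 2
      - chi / 2 * u i j k * (rho_of v i j k + t * Amob e i j k)
      + (kappa / 2 * u i j k ^ 2 - mu / 4 * u i j k * Lap u i j k - phi_source i j k * u i j k)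
      - 1 / (2 * dt) * (v i j k + t * e i j k) * (Amob v i j k + t * Amob e i j k)).
  apply (derivable_pt_lim_ext (fun t => sum3 N (fun i j k => cell i j k t)
                                        + 1 / 2 * (sum3 N v + t * sum3 N e) ^ 2)).
  - intros t. unfold Kfun. cbn [fst snd]. f_equal.
    + apply sum3_ext; intros. unfold cell_energy, cell. rewrite rho_of_plus_scal, Amob_plus_scal. reflexivity.
    + rewrite sum3_plus, sum3_scal. reflexivity.
  - apply derivable_pt_lim_plus.
    + apply (sum3_derivable_pt_lim N cell). intros. apply cell_v_derivable_pt_lim; auto. lra.
    + apply half_sq_derivable_pt_lim.
Qed.

Lemma Kfun_u_derivable_pt_lim (v u e : grid) :
  derivable_pt_lim (fun t => Kfun (v, fun i j k => u i j k + t * e i j k)) 0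
   (sum3 N (fun i j k => - chi / 2 * e i j k * rho_of v i j k + kappa * u i j k * e i j k
        - mu / 4 * (e i j k * Lap u i j k + u i j k * Lap e i j k) - phi_source i j k * e i j k)).
Proof.
  set (cell := fun i j k t =>
      (gamma * Fcell (rho_n i j k) (rho_of v i j k) + stab / 2 * (rho_of v i j k - rho_n i j k) ^ 2
       - 1 / (2 * dt) * v i j k * Amob v i j k)
      - chi / 2 * (u i j k + t * e i j k) * rho_of v i j k + kappa / 2 * (u i j k + t * e i j k) ^ 2
      - mu / 4 * (u i j k + t * e i j k) * (Lap u i j k + t * Lap e i j k)
      - phi_source i j k * (u i j k + t * e i j k)).
  apply (derivable_pt_lim_ext (fun t => sum3 N (fun i j k => cell i j k t) + 1 / 2 * (sum3 N v) ^ 2)).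
  - intros t. unfold Kfun. cbn [fst snd]. f_equal.
    apply sum3_ext; intros. unfold cell_energy, cell. rewrite Lap_plus_scal. ring.
  - rewrite <- Rplus_0_r. apply derivable_pt_lim_plus.
    + apply (sum3_derivable_pt_lim N cell). intros. apply cell_u_derivable_pt_lim.
    + apply derivable_pt_lim_const.
Qed.

Definition potential_of (v u : grid) (i j k : nat) :=
  gamma * Scell (rho_n i j k) (rho_of v i j k) + stab * (rho_of v i j k - rho_n i j k) - chi / 2 * u i j k.

Lemma Kfun_v_derivative_delta3 (v u : grid) i0 j0 k0 : in_grid N i0 -> in_grid N j0 -> in_grid N k0 ->
  let e := delta3 i0 j0 k0 in
  sum3 N (fun i j k => gamma * Scell (rho_n i j k) (rho_of v i j k) * Amob e i j k
        + stab * (rho_of v i j k - rho_n i j k) * Amob e i j k - chi / 2 * u i j k * Amob e i j k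
        - 1 / (2 * dt) * (e i j k * Amob v i j k + v i j k * Amob e i j k)) + sum3 N v * sum3 N e
  = Amob (potential_of v u) i0 j0 k0 - 1 / dt * Amob v i0 j0 k0 + sum3 N v.
Proof.
  intros Hi Hj Hk e.
  rewrite (sum3_ext N _ (fun i j k => (potential_of v u i j k * Amob e i j k
      - 1 / (2 * dt) * (e i j k * Amob v i j k)) - 1 / (2 * dt) * (v i j k * Amob e i j k)))
    by (intros; unfold potential_of; ring).
  rewrite sum3_minus, sum3_minus, sum3_scal, sum3_scal.
  rewrite (sum3_mul_Amob_sym (potential_of v u) e), (sum3_mul_Amob_sym v e).
  unfold e. rewrite !sum3_delta3_mul by auto. rewrite sum3_delta3 by auto. field. lra.
Qed.

Lemma Kfun_u_derivative_delta3 (v u : grid) i0 j0 k0 : in_grid N i0 -> in_grid N j0 -> in_grid N k0 ->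
  let e := delta3 i0 j0 k0 in
  sum3 N (fun i j k => - chi / 2 * e i j k * rho_of v i j k + kappa * u i j k * e i j k
        - mu / 4 * (e i j k * Lap u i j k + u i j k * Lap e i j k) - phi_source i j k * e i j k)
  = helm u i0 j0 k0 - chi / 2 * rho_of v i0 j0 k0 - phi_source i0 j0 k0.
Proof.
  intros Hi Hj Hk e.
  rewrite (sum3_ext N _ (fun i j k => e i j k * (- chi / 2 * rho_of v i j k + kappa * u i j k
      - mu / 4 * Lap u i j k - phi_source i j k) - mu / 4 * (u i j k * Lap e i j k))) by (intros; ring).
  rewrite sum3_minus, sum3_scal, (sum3_mul_Lap_sym u e).
  unfold e, helm. rewrite !sum3_delta3_mul by auto. field.
Qed.

Lemma uniform_margin (g1 g2 g3 : grid) Ma : 0 <= Ma ->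
  (forall i j k, in_grid N i -> in_grid N j -> in_grid N k -> 0 < g1 i j k /\ 0 < g2 i j k /\ 0 < g3 i j k) ->
  exists eps, 0 < eps /\ forall i j k, in_grid N i -> in_grid N j -> in_grid N k ->
     eps <= g1 i j k /\ eps <= g2 i j k /\ eps * Ma <= g3 i j k.
Proof.
  intros HMa Hg0.
  set (Sg := 1 + sum3 N (fun i j k => / g1 i j k + / g2 i j k + Ma / g3 i j k)).
  assert (Hnn : forall i j k, in_grid N i -> in_grid N j -> in_grid N k ->
                0 <= / g1 i j k + / g2 i j k + Ma / g3 i j k).
  { intros. destruct (Hg0 i j k H H0 H1) as [A1 [A2 A3]].
    pose proof (Rinv_0_lt_compat _ A1). pose proof (Rinv_0_lt_compat _ A2).
    assert (0 <= Ma / g3 i j k) by (apply Rmult_le_pos; [lra|apply Rlt_le, Rinv_0_lt_compat; lra]). lra. }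
  assert (HSg : 1 <= Sg) by (unfold Sg; pose proof (sum3_nonneg N _ Hnn); lra).
  exists (/ Sg). split. apply Rinv_0_lt_compat; lra.
  intros i j k Hi Hj Hk. destruct (Hg0 i j k Hi Hj Hk) as [A1 [A2 A3]].
  pose proof (sum3_ge_term N _ i j k Hnn Hi Hj Hk) as Ht. cbv beta in Ht.
  pose proof (Rinv_0_lt_compat _ A1). pose proof (Rinv_0_lt_compat _ A2).
  assert (0 <= Ma / g3 i j k) by (apply Rmult_le_pos; [lra|apply Rlt_le, Rinv_0_lt_compat; lra]).
  assert (B1 : / g1 i j k <= Sg) by (unfold Sg; lra).
  assert (B2 : / g2 i j k <= Sg) by (unfold Sg; lra).
  assert (B3 : Ma / g3 i j k <= Sg) by (unfold Sg; lra).
  repeat split.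
  - rewrite <- (Rinv_inv (g1 i j k)). apply Rinv_le_contravar; auto.
  - rewrite <- (Rinv_inv (g2 i j k)). apply Rinv_le_contravar; auto.
  - apply (Rmult_le_reg_l Sg). lra. rewrite <- Rmult_assoc, Rinv_r by lra.
    apply (Rmult_le_reg_r (/ g3 i j k)). apply Rinv_0_lt_compat; auto.
    rewrite (Rmult_assoc Sg), Rinv_r by lra. unfold Rdiv in B3. lra.
Qed.

Section Existence.
Variable lam : R.
Hypothesis Hlam : 0 < lam.
Hypothesis Hq : forall v, lam * sum3 N (fun i j k => v i j k ^ 2) <= qform v.

Definition Kbound := Rabs (Kfun (zero_grid, zero_grid)) + Kfun_shift.
Definition radius := 2 + (8 / alpha + 2 / lam) * Kbound.
Definition rho_floor (i j k : nat) := Fcell_barrier (rho_n i j k) (Kbound / gamma).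

Definition admissible (p : grid2) := forall i j k, in_grid N i -> in_grid N j -> in_grid N k ->
  Rabs (fst p i j k) <= radius /\ Rabs (snd p i j k) <= radius /\ rho_floor i j k <= rho_of (fst p) i j k.

Lemma Kbound_nonneg : 0 <= Kbound.
Proof. unfold Kbound. pose proof Kfun_shift_nonneg. pose proof (Rabs_pos (Kfun (zero_grid, zero_grid))). lra. Qed.

Lemma rho_floor_spec i j k : in_grid N i -> in_grid N j -> in_grid N k ->
  0 < rho_floor i j k /\ rho_floor i j k <= rho_n i j k /\ Kbound / gamma + 1 <= Fcell (rho_n i j k) (rho_floor i j k).
Proof.
  intros Hi Hj Hk. apply Fcell_barrier_spec; auto.
  apply Rmult_le_pos; [apply Kbound_nonneg|apply Rlt_le, Rinv_0_lt_compat; lra].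
Qed.

Lemma admissible_zero : admissible (zero_grid, zero_grid).
Proof.
  intros i j k Hi Hj Hk. cbn [fst snd]. unfold zero_grid at 1 2. rewrite Rabs_R0.
  pose proof Kbound_nonneg.
  assert (0 <= (8 / alpha + 2 / lam) * Kbound).
  { apply Rmult_le_pos; auto. assert (0 < 8 / alpha) by (apply Rdiv_lt_0_compat; lra).
    assert (0 < 2 / lam) by (apply Rdiv_lt_0_compat; lra). lra. }
  unfold radius, rho_of, Amob, zero_grid. rewrite divDgrad_const.
  destruct (rho_floor_spec i j k Hi Hj Hk) as [_ [Hf _]]. repeat split; lra.
Qed.

Lemma admissible_rho_of_pos p : admissible p -> rho_of_pos (fst p).
Proof.
  intros Hp i j k Hi Hj Hk. destruct (Hp i j k Hi Hj Hk) as [_ [_ H]].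
  destruct (rho_floor_spec i j k Hi Hj Hk). lra.
Qed.

Lemma admissible_seq_closed : seq_closed N admissible.
Proof.
  intros s x Hs Hc i j k Hi Hj Hk. destruct (Hc i j k Hi Hj Hk) as [H1 H2]. repeat split.
  - apply (Un_cv_Rabs_le _ _ _ H1). intros; apply (Hs n); auto.
  - apply (Un_cv_Rabs_le _ _ _ H2). intros; apply (Hs n); auto.
  - apply (Un_cv_ge_const (fun n => rho_of (fst (s n)) i j k)). 2: intros; apply (Hs n); auto.
    assert (seq_continuous_on N (fun _ => True) (fun p => rho_of (fst p) i j k))
      by (unfold rho_of, Amob; seqc).
    apply H; auto.
Qed.

Lemma Kfun_seq_continuous : seq_continuous_on N admissible Kfun.
Proof.
  unfold Kfun. apply seqc_plus.
  - apply seqc_sum3. intros i j k Hi Hj Hk.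
    assert (seq_continuous_on N admissible (fun p => Fcell (rho_n i j k) (rho_of (fst p) i j k))).
    { apply seqc_comp. unfold rho_of, Amob; seqc.
      intros p Hp. apply Fcell_continuity_pt. apply admissible_rho_of_pos; auto. }
    unfold cell_energy, Lap. unfold rho_of, Amob in *. seqc.
  - apply seqc_mult. apply seqc_const. apply seqc_pow2.
    apply (seqc_sum3 N admissible (fun i j k p => fst p i j k)). intros; apply seqc_fst; auto.
Qed.

Lemma Kfun_min_exists : exists p, admissible p /\ forall q, admissible q -> Kfun p <= Kfun q.
Proof.
  apply (seq_compact_has_min N admissible Kfun radius (zero_grid, zero_grid)).
  - apply admissible_zero.
  - apply admissible_seq_closed.
  - intros p Hp i j k Hi Hj Hk. destruct (Hp i j k Hi Hj Hk) as [A1 [A2 _]]. auto.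
  - apply Kfun_seq_continuous.
  - exists (- Kfun_shift). intros [v u] Hp.
    pose proof (Kfun_coercive lam v u (admissible_rho_of_pos _ Hp) Hq).
    pose proof (sum3_sq_nonneg N u). pose proof (sum3_sq_nonneg N v).
    assert (0 <= alpha / 8 * sum3 N (fun i j k => u i j k ^ 2)) by (apply Rmult_le_pos; lra).
    assert (0 <= lam / 2 * sum3 N (fun i j k => v i j k ^ 2)) by (apply Rmult_le_pos; lra).
    lra.
Qed.

Section Minimizer.
Variables vs us : grid.
Hypothesis Hadm : admissible (vs, us).
Hypothesis Hmin : forall q, admissible q -> Kfun (vs, us) <= Kfun q.

Lemma minimizer_rho_of_pos : rho_of_pos vs.
Proof. apply (admissible_rho_of_pos (vs, us)); auto. Qed.

Lemma minimizer_le_zero : Kfun (vs, us) <= Kfun (zero_grid, zero_grid).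
Proof. apply Hmin, admissible_zero. Qed.

Lemma minimizer_interior i j k : in_grid N i -> in_grid N j -> in_grid N k ->
  Rabs (vs i j k) < radius /\ Rabs (us i j k) < radius /\ rho_floor i j k < rho_of vs i j k.
Proof.
  intros Hi Hj Hk.
  pose proof minimizer_le_zero as HK. pose proof Kbound_nonneg as HKb.
  pose proof (Rle_abs (Kfun (zero_grid, zero_grid))).
  pose proof (Kfun_coercive lam vs us minimizer_rho_of_pos Hq) as Hc.
  pose proof (sum3_sq_nonneg N us). pose proof (sum3_sq_nonneg N vs).
  pose proof (sum3_sq_ge_term N us i j k Hi Hj Hk). pose proof (sum3_sq_ge_term N vs i j k Hi Hj Hk).
  assert (0 <= alpha / 8 * sum3 N (fun i j k => us i j k ^ 2)) by (apply Rmult_le_pos; lra).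
  assert (0 <= lam / 2 * sum3 N (fun i j k => vs i j k ^ 2)) by (apply Rmult_le_pos; lra).
  assert (Ha : 0 < 8 / alpha) by (apply Rdiv_lt_0_compat; lra).
  assert (Hl : 0 < 2 / lam) by (apply Rdiv_lt_0_compat; lra).
  split; [|split].
  - assert (Hv : vs i j k ^ 2 <= 2 / lam * Kbound).
    { apply (Rmult_le_reg_l (lam / 2)). apply Rdiv_lt_0_compat; lra.
      replace (lam / 2 * (2 / lam * Kbound)) with Kbound by (field; lra).
      assert (lam / 2 * vs i j k ^ 2 <= lam / 2 * sum3 N (fun i j k => vs i j k ^ 2))
        by (apply Rmult_le_compat_l; lra).
      unfold Kbound. lra. }
    pose proof (Rabs_lt_of_sq_le (vs i j k) _ Hv ltac:(apply Rmult_le_pos; lra)).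
    pose proof (Rmult_le_pos _ _ (Rlt_le _ _ Ha) HKb). unfold radius, Kbound in *. lra.
  - assert (Hu : us i j k ^ 2 <= 8 / alpha * Kbound).
    { apply (Rmult_le_reg_l (alpha / 8)). apply Rdiv_lt_0_compat; lra.
      replace (alpha / 8 * (8 / alpha * Kbound)) with Kbound by (field; lra).
      assert (alpha / 8 * us i j k ^ 2 <= alpha / 8 * sum3 N (fun i j k => us i j k ^ 2))
        by (apply Rmult_le_compat_l; lra).
      unfold Kbound. lra. }
    pose proof (Rabs_lt_of_sq_le (us i j k) _ Hu ltac:(apply Rmult_le_pos; lra)).
    pose proof (Rmult_le_pos _ _ (Rlt_le _ _ Hl) HKb). unfold radius, Kbound in *. lra.
  - destruct (Hadm i j k Hi Hj Hk) as [_ [_ Hd]]. cbn [fst] in Hd. destruct Hd as [Hd|Hd]; auto.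
    exfalso. pose proof (Kfun_ge_cell vs us i j k minimizer_rho_of_pos Hi Hj Hk) as Hcell.
    rewrite <- Hd in Hcell.
    destruct (rho_floor_spec i j k Hi Hj Hk) as [_ [_ HF]].
    assert (gamma * (Kbound / gamma + 1) <= gamma * Fcell (rho_n i j k) (rho_floor i j k))
      by (apply Rmult_le_compat_l; lra).
    assert (gamma * (Kbound / gamma) = Kbound) by (field; lra). unfold Kbound in *. lra.
Qed.

Lemma minimizer_perturb i0 j0 k0 : in_grid N i0 -> in_grid N j0 -> in_grid N k0 ->
  exists eps, 0 < eps /\ forall t, - eps < t < eps ->
    admissible (fun i j k => vs i j k + t * delta3 i0 j0 k0 i j k, us) /\
    admissible (vs, fun i j k => us i j k + t * delta3 i0 j0 k0 i j k).
Proof.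
  intros Hi0 Hj0 Hk0. set (e := delta3 i0 j0 k0).
  set (Ma := sum3 N (fun i j k => Rabs (Amob e i j k))).
  assert (HMa : 0 <= Ma) by (apply sum3_nonneg; intros; apply Rabs_pos).
  destruct (uniform_margin (fun i j k => radius - Rabs (vs i j k)) (fun i j k => radius - Rabs (us i j k))
             (fun i j k => rho_of vs i j k - rho_floor i j k) Ma HMa) as [eps [Heps Hm]].
  { intros i j k Hi Hj Hk. destruct (minimizer_interior i j k Hi Hj Hk) as [A1 [A2 A3]]. lra. }
  exists eps. split; auto. intros t Ht.
  assert (Hte : forall i j k, Rabs (t * e i j k) < eps).
  { intros. rewrite Rabs_mult. pose proof (delta3_bound i0 j0 k0 i j k). fold e in H.
    rewrite (Rabs_right (e i j k)) by lra. pose proof (Rabs_pos t).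
    assert (Rabs t < eps) by (unfold Rabs; destruct Rcase_abs; lra). nra. }
  split; intros i j k Hi Hj Hk; cbn [fst snd]; destruct (Hm i j k Hi Hj Hk) as [B1 [B2 B3]];
    destruct (Hadm i j k Hi Hj Hk) as [C1 [C2 C3]]; cbn [fst snd] in C1, C2, C3.
  - split; [|split]; auto.
    + pose proof (Rabs_triang (vs i j k) (t * e i j k)). pose proof (Hte i j k). lra.
    + rewrite rho_of_plus_scal.
      assert (Rabs (Amob e i j k) <= Ma) by (apply (sum3_ge_term N (fun i j k => Rabs (Amob e i j k)));
                                             auto; intros; apply Rabs_pos).
      assert (Rabs (t * Amob e i j k) <= eps * Ma).
      { rewrite Rabs_mult. apply Rmult_le_compat; try apply Rabs_pos; auto.
        unfold Rabs; destruct Rcase_abs; lra. }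
      pose proof (Rle_abs (- (t * Amob e i j k))). rewrite Rabs_Ropp in H1. lra.
  - split; [|split]; auto.
    pose proof (Rabs_triang (us i j k) (t * e i j k)). pose proof (Hte i j k). lra.
Qed.

Lemma zero_perturbation (w e : grid) : (fun i j k => w i j k + 0 * e i j k) = w.
Proof.
  apply functional_extensionality; intros i; apply functional_extensionality; intros j;
  apply functional_extensionality; intros k. ring.
Qed.

Lemma minimizer_euler_lagrange_v i0 j0 k0 : in_grid N i0 -> in_grid N j0 -> in_grid N k0 ->
  Amob (potential_of vs us) i0 j0 k0 - 1 / dt * Amob vs i0 j0 k0 + sum3 N vs = 0.
Proof.
  intros Hi0 Hj0 Hk0. destruct (minimizer_perturb i0 j0 k0 Hi0 Hj0 Hk0) as [eps [Heps Hp]].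
  pose proof (Kfun_v_derivable_pt_lim vs us (delta3 i0 j0 k0) minimizer_rho_of_pos) as Hd.
  rewrite (Kfun_v_derivative_delta3 vs us i0 j0 k0 Hi0 Hj0 Hk0) in Hd.
  apply (interior_min_derivative _ _ eps Heps Hd). intros t Ht. cbv beta.
  rewrite zero_perturbation. apply Hmin, Hp; auto.
Qed.

Lemma minimizer_euler_lagrange_u i0 j0 k0 : in_grid N i0 -> in_grid N j0 -> in_grid N k0 ->
  helm us i0 j0 k0 - chi / 2 * rho_of vs i0 j0 k0 - phi_source i0 j0 k0 = 0.
Proof.
  intros Hi0 Hj0 Hk0. destruct (minimizer_perturb i0 j0 k0 Hi0 Hj0 Hk0) as [eps [Heps Hp]].
  pose proof (Kfun_u_derivable_pt_lim vs us (delta3 i0 j0 k0)) as Hd.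
  rewrite (Kfun_u_derivative_delta3 vs us i0 j0 k0 Hi0 Hj0 Hk0) in Hd.
  apply (interior_min_derivative _ _ eps Heps Hd). intros t Ht. cbv beta.
  rewrite zero_perturbation. apply Hmin, Hp; auto.
Qed.

Lemma minimizer_mean0 : sum3 N vs = 0.
Proof.
  assert (Hsum : sum3 N (fun i j k => Amob (potential_of vs us) i j k + (- (1 / dt)) * Amob vs i j k
                                      + sum3 N vs) = 0).
  { rewrite (sum3_ext N _ (fun _ _ _ => 0)). rewrite sum3_const; ring.
    intros. rewrite <- (minimizer_euler_lagrange_v i j k) by auto. ring. }
  rewrite !sum3_plus, sum3_scal in Hsum. unfold Amob in Hsum.
  rewrite !sum3_divDgrad in Hsum by auto using hmesh_neq0.
  apply (sum3_const_eq0 N); auto. lra.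
Qed.

Lemma minimizer_solves_scheme :
  scheme a b N gamma mu alpha chi theta dt rho_prev rho_n phi_n (rho_of vs) (fun i j k => us i j k - phi_n i j k).
Proof.
  apply scheme_iff. intros i j k Hi Hj Hk. split.
  - unfold Amob at 1. rewrite (divDgrad_ext N hmesh mobility _ (potential_of vs us)).
    2:{ intros. unfold potential, Shalf, potential_of, Scell, stab. ring. }
    fold (Amob (potential_of vs us)).
    pose proof (minimizer_euler_lagrange_v i j k Hi Hj Hk). rewrite minimizer_mean0 in H.
    assert (E : Amob (potential_of vs us) i j k = 1 / dt * Amob vs i j k) by lra.
    unfold rho_of. rewrite E. field. lra.
  - rewrite (helm_ext _ us) by (intros; ring).
    pose proof (minimizer_euler_lagrange_u i j k Hi Hj Hk). lra.
Qed.

Lemma minimizer_rho_pos : grid_pos N (rho_of vs).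
Proof.
  intros i j k Hi Hj Hk. destruct (minimizer_interior i j k Hi Hj Hk) as [_ [_ H]].
  destruct (rho_floor_spec i j k Hi Hj Hk). lra.
Qed.
End Minimizer.

Lemma scheme_exists_of_coercive : exists rho1 phi1 : grid,
  scheme a b N gamma mu alpha chi theta dt rho_prev rho_n phi_n rho1 phi1 /\ grid_pos N rho1.
Proof.
  destruct Kfun_min_exists as [[vs us] [Hadm Hmin]].
  exists (rho_of vs), (fun i j k => us i j k - phi_n i j k). split.
  - apply minimizer_solves_scheme; auto.
  - apply (minimizer_rho_pos vs us); auto.
Qed.
End Existence.

Lemma scheme_exists : exists rho1 phi1 : grid,
  scheme a b N gamma mu alpha chi theta dt rho_prev rho_n phi_n rho1 phi1 /\ grid_pos N rho1.
Proof. destruct qform_coercive as [lam [Hlam Hq]]. apply (scheme_exists_of_coercive lam); auto. Qed.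
End Scheme.

Theorem mainTheorem3 (a b : R) (N : nat)
    (gamma mu alpha chi theta dt : R) (rho_prev rho_n phi_n : grid) :
  a < b -> (1 <= N)%nat ->
  0 < gamma -> 0 < mu -> 0 < alpha -> 0 < chi -> 0 < theta -> 0 < dt ->
  grid_pos N rho_n ->
  exists rho1 phi1 : grid,
    scheme a b N gamma mu alpha chi theta dt rho_prev rho_n phi_n rho1 phi1
    /\ grid_pos N rho1
    /\ (forall rho2 phi2 : grid,
          scheme a b N gamma mu alpha chi theta dt rho_prev rho_n phi_n rho2 phi2 ->
          grid_pos N rho2 ->
          grid_eq N rho1 rho2 /\ grid_eq N phi1 phi2).
Proof.
  intros Hab HN Hg Hmu Hal _ Hth Hdt Hrho.
  destruct (scheme_exists a b N gamma mu alpha chi theta dt rho_prev rho_n phi_n Hab HN Hg Hmu Hal Hth Hdt Hrho)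
    as [rho1 [phi1 [Hs Hpos]]].
  exists rho1, phi1. split; [|split]; auto.
  intros rho2 phi2 Hs2 Hpos2.
  apply (scheme_unique a b N gamma mu alpha chi theta dt rho_prev rho_n phi_n Hab HN Hg Hmu Hal Hth Hdt Hrho); auto.
Qed.
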